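(* Let $N\ge2$ and let $f\in C(\mathbb{T}^N)$ be constant on diagonal orbits, i.e. $f(ux_1,\ldots,ux_N)=f(x)$ for all $x\in\mathbb{T}^N$ and $|u|=1$. Then $\|f-f*\sigma_n^{N-1}\|_\infty\to0$ as $n\to\infty$, where $(f*\sigma)(x)=\int_{\mathbb{T}^N}f(y)\sigma(xy^{-1})\,\mathrm{d}m(y)$.
   Context: $\mathbb{T}^N=\{x\in\mathbb{C}^N:|x_j|=1\}$ with normalized Haar measure $\mathrm{d}m=(2\pi)^{-N}\mathrm{d}\theta_1\cdots\mathrm{d}\theta_N$, $x_j=e^{\mathrm{i}\theta_j}$; $xy^{-1}$ is coordinatewise. $(t)_m=\prod_{i=1}^m(t+i-1)$. $\boldsymbol{Z}_{N,k}=\{\alpha\in\mathbb{Z}^N:\sum_i\alpha_i=0,\ \sum_i|\alpha_i|=2k\}$, $S_k(x)=\sum_{\alpha\in\boldsymbol{Z}_{N,k}}x^\alpha$, $\sigma_n^\delta(x)=\sum_{k=0}^n\frac{(-n)_k}{(-n-\delta)_k}S_k(x)$. *)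

From Stdlib Require Import Reals Lra ZArith List ClassicalEpsilon.
Open Scope R_scope.

(* Points of T^N are parametrised by angles: theta : nat -> R, x_j = exp(i theta_j),
   only coordinates j < N are relevant.  Complex numbers are pairs (re, im). *)

(* total Riemann integral on [a,b]: the value of RiemannInt when g is integrable *)
Definition Rint (g : R -> R) (a b : R) : R :=
  epsilon (inhabits 0) (fun I => exists pr : Riemann_integrable g a b, RiemannInt pr = I).

Definition upd (th : nat -> R) (j : nat) (t : R) : nat -> R :=
  fun i => if Nat.eqb i j then t else th i.

(* Integral against normalized Haar measure dm on T^N, computed as the iterated
   integral (2 pi)^{-N} int_0^{2pi} ... int_0^{2pi} g dtheta_0 ... dtheta_{N-1}
   (coordinates >= N are taken from th0). *)
Fixpoint IntTorus (n : nat) (g : (nat -> R) -> R) (th0 : nat -> R) : R :=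
  match n with
  | O => g th0
  | S m => / (2 * PI) * Rint (fun t => IntTorus m g (upd th0 m t)) 0 (2 * PI)
  end.

Definition haar_int (N : nat) (g : (nat -> R) -> R) : R := IntTorus N g (fun _ => 0).

Fixpoint poch (t : R) (m : nat) : R :=
  match m with
  | O => 1
  | S k => poch t k * (t + INR k)
  end.

Definition zrange (B : nat) : list Z :=
  map (fun i => (Z.of_nat i - Z.of_nat B)%Z) (seq 0 (2 * B + 1)).

Fixpoint boxes (n B : nat) : list (list Z) :=
  match n with
  | O => nil :: nil
  | S m => flat_map (fun a => map (cons a) (boxes m B)) (zrange B)
  end.

Definition inZNk (k : nat) (al : list Z) : bool :=
  Z.eqb (fold_right Z.add 0%Z al) 0%Z &&
  Z.eqb (fold_right Z.add 0%Z (map Z.abs al)) (2 * Z.of_nat k)%Z.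

(* Z_{N,k} as a duplicate-free list; every element satisfies |alpha_i| <= 2k *)
Definition ZNk (N k : nat) : list (list Z) := filter (inZNk k) (boxes N (2 * k)).

Fixpoint dotZ (al : list Z) (th : nat -> R) (i : nat) : R :=
  match al with
  | nil => 0
  | a :: r => IZR a * th i + dotZ r th (S i)
  end.

Definition sumR (l : list R) : R := fold_right Rplus 0 l.

(* S_k(x) = sum_{alpha in Z_{N,k}} x^alpha, x^alpha = exp(i alpha.theta) *)
Definition S_re (N k : nat) (th : nat -> R) : R :=
  sumR (map (fun al => cos (dotZ al th 0)) (ZNk N k)).
Definition S_im (N k : nat) (th : nat -> R) : R :=
  sumR (map (fun al => sin (dotZ al th 0)) (ZNk N k)).

Definition coefs (n : nat) (delta : R) (k : nat) : R :=
  poch (- INR n) k / poch (- INR n - delta) k.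

Definition sigma_re (N n : nat) (delta : R) (th : nat -> R) : R :=
  sumR (map (fun k => coefs n delta k * S_re N k th) (seq 0 (S n))).
Definition sigma_im (N n : nat) (delta : R) (th : nat -> R) : R :=
  sumR (map (fun k => coefs n delta k * S_im N k th) (seq 0 (S n))).

(* coordinatewise x y^{-1} in angles *)
Definition subang (th ph : nat -> R) : nat -> R := fun i => th i - ph i.

(* (f * sigma)(x) = int f(y) sigma(x y^{-1}) dm(y), f = fr + i fi *)
Definition conv_re (N n : nat) (delta : R) (fr fi : (nat -> R) -> R) (th : nat -> R) : R :=
  haar_int N (fun ph => fr ph * sigma_re N n delta (subang th ph)
                        - fi ph * sigma_im N n delta (subang th ph)).
Definition conv_im (N n : nat) (delta : R) (fr fi : (nat -> R) -> R) (th : nat -> R) : R :=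
  haar_int N (fun ph => fr ph * sigma_im N n delta (subang th ph)
                        + fi ph * sigma_re N n delta (subang th ph)).

Definition torus_fun (N : nat) (g : (nat -> R) -> R) : Prop :=
  (forall th th', (forall i, (i < N)%nat -> th i = th' i) -> g th = g th') /\
  (forall th j, (j < N)%nat -> g (upd th j (th j + 2 * PI)) = g th) /\
  (forall th eps, 0 < eps -> exists del, 0 < del /\
     forall th', (forall i, (i < N)%nat -> Rabs (th' i - th i) < del) ->
       Rabs (g th' - g th) < eps).

(* diagonal shift (u x_1, ..., u x_N), u = exp(i t) *)
Definition diag_shift (th : nat -> R) (t : R) : nat -> R := fun i => th i + t.

(* For [delta = N - 1] the kernel is a normalized square,
   [sigma_n^{N-1} = |h_n|^2 / #(compositions of n into N parts)] with [h_n] the sum of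
   [x^a] over those compositions (expand [|h_n|^2] and count the pairs with a given
   difference).  Hence [f * sigma_n] is an average of [f] against a nonnegative kernel of
   mass one.  The defect [D(x, y) = sum_{j,l} (1 - cos((x_j - y_j) - (x_l - y_l)))]
   vanishes exactly on the diagonal orbit of [y], and its average against the kernel is
   read off the Fourier coefficients [n / (n + N - 1)] at the frequencies [e_j - e_l],
   so it is [O(1/n)].  A continuous [f] constant on diagonal orbits is uniformly
   continuous (by compactness of the torus), which gives
   [|f x - f y| <= eps + C_eps D(x, y)]; averaging yields
   [|f - f * sigma_n| <= eps + C_eps O(1/n)]. *)

From Stdlib Require Import Reals Lra Lia ZArith List Permutation
  ClassicalEpsilon Classical FunctionalExtensionality.
From Coquelicot Require Import Coquelicot.
Open Scope R_scope.

Lemma sumR_app l1 l2 : sumR (l1 ++ l2) = sumR l1 + sumR l2.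
Proof. induction l1; simpl; [lra | rewrite IHl1; lra]. Qed.

Lemma sumR_ext {A} (f g : A -> R) l :
  (forall x, In x l -> f x = g x) -> sumR (map f l) = sumR (map g l).
Proof.
  induction l; simpl; intros H; auto.
  rewrite H, IHl; auto.
Qed.

Lemma sumR_plus {A} (f g : A -> R) l :
  sumR (map (fun x => f x + g x) l) = sumR (map f l) + sumR (map g l).
Proof. induction l; simpl; [lra | rewrite IHl; lra]. Qed.

Lemma sumR_scal {A} (c : R) (f : A -> R) l :
  sumR (map (fun x => c * f x) l) = c * sumR (map f l).
Proof. induction l; simpl; [lra | rewrite IHl; lra]. Qed.

Lemma sumR_const {A} (c : R) (l : list A) : sumR (map (fun _ => c) l) = INR (length l) * c.
Proof. induction l; simpl; [ring | rewrite IHl; destruct (length l); simpl; ring]. Qed.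

Lemma sumR_zero {A} (l : list A) : sumR (map (fun _ => 0) l) = 0.
Proof. rewrite sumR_const; ring. Qed.

Lemma sumR_opp {A} (f : A -> R) l : sumR (map (fun x => - f x) l) = - sumR (map f l).
Proof. induction l; simpl; [lra | rewrite IHl; lra]. Qed.

Lemma sumR_le {A} (f g : A -> R) l :
  (forall x, In x l -> f x <= g x) -> sumR (map f l) <= sumR (map g l).
Proof.
  induction l; simpl; intros H; [lra |].
  assert (f a <= g a) by auto.
  assert (sumR (map f l) <= sumR (map g l)) by auto.
  lra.
Qed.

Lemma sumR_nonneg {A} (f : A -> R) l :
  (forall x, In x l -> 0 <= f x) -> 0 <= sumR (map f l).
Proof. intros H. rewrite <- (sumR_zero l). apply sumR_le; auto. Qed.

Lemma sumR_ge_elem {A} (f : A -> R) l x :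
  (forall y, In y l -> 0 <= f y) -> In x l -> f x <= sumR (map f l).
Proof.
  induction l as [|a l IH]; simpl; intros H Hx; [contradiction |].
  assert (0 <= f a) by auto.
  assert (0 <= sumR (map f l)) by (apply sumR_nonneg; auto).
  destruct Hx as [<- | Hx]; [lra |].
  assert (f x <= sumR (map f l)) by auto.
  lra.
Qed.

Lemma sumR_exchange {A B} (F : A -> B -> R) l1 l2 :
  sumR (map (fun x => sumR (map (fun y => F x y) l2)) l1) =
  sumR (map (fun y => sumR (map (fun x => F x y) l1)) l2).
Proof.
  induction l1; simpl.
  - now rewrite sumR_zero.
  - now rewrite IHl1, <- sumR_plus.
Qed.

Lemma sumR_mul {A B} (f : A -> R) (g : B -> R) l1 l2 :
  sumR (map f l1) * sumR (map g l2) =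
  sumR (map (fun x => sumR (map (fun y => f x * g y) l2)) l1).
Proof.
  induction l1; simpl; [lra |].
  now rewrite Rmult_plus_distr_r, IHl1, sumR_scal.
Qed.

Lemma sumR_list_prod {A B} (G : A -> B -> R) l1 l2 :
  sumR (map (fun p => G (fst p) (snd p)) (list_prod l1 l2)) =
  sumR (map (fun a => sumR (map (fun b => G a b) l2)) l1).
Proof.
  induction l1; simpl; auto.
  now rewrite map_app, sumR_app, IHl1, map_map.
Qed.

Lemma sumR_indicator {A} (dec : forall x y : A, {x = y} + {x <> y}) (G : A -> R) U x :
  NoDup U ->
  sumR (map (fun u => if dec u x then G u else 0) U) = if in_dec dec x U then G x else 0.
Proof.
  induction U as [|a U IH]; simpl; intros HN; [reflexivity |].
  inversion HN as [|? ? HaU HU]; subst.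
  rewrite IH by auto.
  destruct (dec a x) as [<- |]; destruct (in_dec dec a U), (dec a a);
    try contradiction; try congruence; try lra.
  destruct (in_dec dec x U); lra.
Qed.

Lemma sumR_regroup {A} (dec : forall x y : A, {x = y} + {x <> y}) (F : A -> R) U L :
  NoDup U -> incl L U ->
  sumR (map F L) = sumR (map (fun u => INR (count_occ dec L u) * F u) U).
Proof.
  intros HN. induction L as [|x L IH]; simpl; intros Hinc.
  - rewrite (sumR_ext _ (fun _ => 0)), sumR_zero; auto.
    intros; simpl; lra.
  - rewrite IH by (intros y Hy; apply Hinc; simpl; auto).
    rewrite (sumR_ext (fun u => INR (count_occ dec (x :: L) u) * F u)
               (fun u => (if dec u x then F u else 0) + INR (count_occ dec L u) * F u)).
    + rewrite sumR_plus, sumR_indicator by auto.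
      destruct (in_dec dec x U) as [| C]; [reflexivity |].
      exfalso; apply C, Hinc; simpl; auto.
    + intros u _. simpl. destruct (dec x u), (dec u x); subst; try congruence.
      * rewrite S_INR; lra.
      * lra.
Qed.

Lemma NoDup_flat_map_disjoint {A B} (g : A -> list B) l :
  NoDup l -> (forall a, In a l -> NoDup (g a)) ->
  (forall a a' x, In a l -> In a' l -> In x (g a) -> In x (g a') -> a = a') ->
  NoDup (flat_map g l).
Proof.
  induction l as [|a l IH]; simpl; intros HN Hg Hd; [constructor |].
  inversion HN; subst.
  apply NoDup_app; auto.
  - apply IH; auto. intros a0 a' x Ha0 Ha'; apply Hd; auto.
  - intros x Hx Hx'. apply in_flat_map in Hx' as [a' [Ha' Hx'']].
    assert (a = a') by (apply (Hd a a' x); auto). subst. contradiction.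
Qed.

Lemma NoDup_map_cons {A} (a : A) (l : list (list A)) : NoDup l -> NoDup (map (cons a) l).
Proof.
  intros H. apply NoDup_map_NoDup_ForallPairs; auto.
  intros x y _ _ E. now injection E.
Qed.

Lemma NoDup_list_prod {A B} (l : list A) (l' : list B) :
  NoDup l -> NoDup l' -> NoDup (list_prod l l').
Proof.
  induction l; simpl; intros H1 H2; [constructor |].
  inversion H1; subst. apply NoDup_app; auto.
  - apply NoDup_map_NoDup_ForallPairs; auto. intros x y _ _ E. now injection E.
  - intros [x y] Hx Hy. apply in_map_iff in Hx as [? [E _]]. injection E as -> ->.
    apply in_prod_iff in Hy as [? _]. contradiction.
Qed.

Lemma count_occ_map_filter {A B} (decB : forall x y : B, {x = y} + {x <> y}) (f : A -> B) L u :
  count_occ decB (map f L) u = length (filter (fun p => if decB (f p) u then true else false) L).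
Proof. induction L; simpl; auto. destruct (decB (f a) u); simpl; auto. Qed.

Lemma filter_all_false {A} (P : A -> bool) L :
  (forall x, In x L -> P x = false) -> filter P L = nil.
Proof. induction L; simpl; intros H; auto. rewrite H by auto. auto. Qed.

Definition zsum (l : list Z) : Z := fold_right Z.add 0%Z l.
Definition vpos (u : list Z) : list Z := map (Z.max 0) u.
Definition vneg (u : list Z) : list Z := map (fun x => Z.max 0 (- x)) u.
Fixpoint vsub (a b : list Z) : list Z :=
  match a, b with x :: a', y :: b' => (x - y)%Z :: vsub a' b' | _, _ => nil end.
Fixpoint vadd (a b : list Z) : list Z :=
  match a, b with x :: a', y :: b' => (x + y)%Z :: vadd a' b' | _, _ => nil end.
Fixpoint vmin (a b : list Z) : list Z :=
  match a, b with x :: a', y :: b' => Z.min x y :: vmin a' b' | _, _ => nil end.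
Definition nonneg (u : list Z) : Prop := List.Forall (fun z => 0 <= z)%Z u.

Definition zlist_dec : forall u v : list Z, {u = v} + {u <> v} := list_eq_dec Z.eq_dec.

Lemma vsub_length a b : length (vsub a b) = Nat.min (length a) (length b).
Proof. revert b; induction a; destruct b; simpl; auto. Qed.
Lemma vadd_length a b : length (vadd a b) = Nat.min (length a) (length b).
Proof. revert b; induction a; destruct b; simpl; auto. Qed.
Lemma vmin_length a b : length (vmin a b) = Nat.min (length a) (length b).
Proof. revert b; induction a; destruct b; simpl; auto. Qed.

Lemma zsum_vadd a b : length a = length b -> zsum (vadd a b) = (zsum a + zsum b)%Z.
Proof.
  revert b; induction a; destruct b; simpl; intros H; try discriminate; auto.
  unfold zsum in *; simpl. rewrite IHa; [lia | auto].
Qed.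
Lemma zsum_vsub a b : length a = length b -> zsum (vsub a b) = (zsum a - zsum b)%Z.
Proof.
  revert b; induction a; destruct b; simpl; intros H; try discriminate; auto.
  unfold zsum in *; simpl. rewrite IHa; [lia | auto].
Qed.
Lemma zsum_pos_neg u : zsum u = (zsum (vpos u) - zsum (vneg u))%Z.
Proof. induction u; unfold zsum in *; simpl; lia. Qed.
Lemma zsum_abs u : fold_right Z.add 0%Z (map Z.abs u) = (zsum (vpos u) + zsum (vneg u))%Z.
Proof. induction u; unfold zsum in *; simpl; lia. Qed.
Lemma zsum_opp w : zsum (map Z.opp w) = (- zsum w)%Z.
Proof. induction w; unfold zsum in *; simpl; lia. Qed.
Lemma vpos_opp w : vpos (map Z.opp w) = vneg w.
Proof. unfold vpos, vneg. now rewrite map_map. Qed.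

Lemma zsum_nonneg l : nonneg l -> (0 <= zsum l)%Z.
Proof. induction 1; unfold zsum in *; simpl; lia. Qed.
Lemma nonneg_le_zsum a : nonneg a -> List.Forall (fun z => 0 <= z <= zsum a)%Z a.
Proof.
  induction 1; constructor.
  - pose proof (zsum_nonneg _ H0). unfold zsum in *; simpl; lia.
  - eapply Forall_impl; [| exact IHForall]. intros z Hz. unfold zsum in *; simpl; lia.
Qed.
Lemma vpos_nonneg u : nonneg (vpos u).
Proof. induction u; simpl; constructor; auto; lia. Qed.
Lemma vneg_nonneg u : nonneg (vneg u).
Proof. induction u; simpl; constructor; auto; lia. Qed.
Lemma vmin_nonneg a b : nonneg a -> nonneg b -> nonneg (vmin a b).
Proof.
  unfold nonneg; revert b; induction a; destruct b; simpl; intros H1 H2; constructor;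
    inversion H1; inversion H2; subst; auto; lia.
Qed.
Lemma vadd_nonneg a b : nonneg a -> nonneg b -> nonneg (vadd a b).
Proof.
  unfold nonneg; revert b; induction a; destruct b; simpl; intros H1 H2; constructor;
    inversion H1; inversion H2; subst; auto; lia.
Qed.

Lemma Forall_vsub (P Q R : Z -> Prop) a b : (forall x y, P x -> Q y -> R (x - y)%Z) ->
  List.Forall P a -> List.Forall Q b -> List.Forall R (vsub a b).
Proof.
  intros H HA; revert b; induction HA; intros b HB; destruct b; simpl; constructor;
    inversion HB; subst; auto.
Qed.

Lemma vsub_decomp a b : length a = length b ->
  a = vadd (vpos (vsub a b)) (vmin a b) /\ b = vadd (vneg (vsub a b)) (vmin a b).
Proof.
  revert b; induction a; destruct b; simpl; intros H; try discriminate; auto.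
  destruct (IHa b) as [E1 E2]; [lia |]. rewrite <- E1, <- E2. split; f_equal; lia.
Qed.

Lemma vsub_vadd_pos_neg u c : length c = length u ->
  vsub (vadd (vpos u) c) (vadd (vneg u) c) = u.
Proof.
  revert c; induction u; destruct c; simpl; intros H; try discriminate; auto.
  rewrite IHu by lia. f_equal. lia.
Qed.

Lemma vadd_inj p c c' : length c = length p -> length c' = length p ->
  vadd p c = vadd p c' -> c = c'.
Proof.
  revert c c'; induction p; destruct c, c'; simpl; intros H1 H2 H; try discriminate; auto.
  injection H as E1 E2. f_equal; [lia | apply IHp; auto].
Qed.

Lemma Forall_zero_vadd a w : length a = length w ->
  List.Forall (fun z => z = 0%Z) (vadd a w) <-> a = map Z.opp w.
Proof.
  revert w; induction a; destruct w; simpl; intros H; try discriminate; [split; auto |].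
  split.
  - intros HF. inversion HF; subst. f_equal; [lia | apply IHa; auto].
  - intros E. injection E as -> ->. constructor; [lia | apply IHa; auto].
Qed.

Lemma Forall_zero_vsub a w : length a = length w ->
  List.Forall (fun z => z = 0%Z) (vsub a w) <-> a = w.
Proof.
  revert w; induction a; destruct w; simpl; intros H; try discriminate; [split; auto |].
  split.
  - intros HF. inversion HF; subst. f_equal; [lia | apply IHa; auto].
  - intros E. injection E as -> ->. constructor; [lia | apply IHa; auto].
Qed.

Lemma In_zrange B z : In z (zrange B) <-> (Z.abs z <= Z.of_nat B)%Z.
Proof.
  unfold zrange. rewrite in_map_iff. split.
  - intros [i [<- Hi]]. apply in_seq in Hi. lia.
  - intros H. exists (Z.to_nat (z + Z.of_nat B)). split; [lia | apply in_seq; lia].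
Qed.

Lemma NoDup_zrange B : NoDup (zrange B).
Proof.
  apply NoDup_map_NoDup_ForallPairs; [| apply seq_NoDup].
  intros x y _ _ H. lia.
Qed.

Lemma In_boxes n B v :
  In v (boxes n B) <-> length v = n /\ List.Forall (fun z => Z.abs z <= Z.of_nat B)%Z v.
Proof.
  revert v; induction n; intros v; simpl.
  - split; [intros [<- | []]; split; auto |].
    intros [H _]. destruct v; simpl in H; try lia; auto.
  - rewrite in_flat_map. split.
    + intros [a [Ha Hv]]. apply in_map_iff in Hv as [w [<- Hw]].
      apply IHn in Hw as [? ?]. apply In_zrange in Ha. simpl. split; auto.
    + intros [Hl HF]. destruct v as [|a w]; simpl in Hl; try lia.
      inversion HF; subst. exists a. split; [apply In_zrange; auto |].
      apply in_map, IHn. split; auto.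
Qed.

Lemma NoDup_boxes n B : NoDup (boxes n B).
Proof.
  induction n; simpl; [repeat constructor; auto |].
  apply NoDup_flat_map_disjoint; [apply NoDup_zrange | intros; apply NoDup_map_cons; auto |].
  intros a a' x _ _ H1 H2. apply in_map_iff in H1 as [? [<- _]], H2 as [? [H _]].
  now injection H.
Qed.

Lemma NoDup_ZNk N k : NoDup (ZNk N k).
Proof. apply NoDup_filter, NoDup_boxes. Qed.

Lemma abs_le_zsum_abs u : List.Forall (fun z => Z.abs z <= fold_right Z.add 0 (map Z.abs u))%Z u.
Proof.
  assert (Hnn : forall v, (0 <= fold_right Z.add 0 (map Z.abs v))%Z).
  { induction v; simpl; [lia | pose proof (Z.abs_nonneg a); lia]. }
  induction u; simpl; constructor.
  - pose proof (Hnn u). lia.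
  - eapply Forall_impl; [| exact IHu]. intros z Hz; simpl in *. pose proof (Z.abs_nonneg a). lia.
Qed.

Lemma In_ZNk N k u : length u = N ->
  In u (ZNk N k) <-> (zsum u = 0 /\ zsum (vpos u) = Z.of_nat k)%Z.
Proof.
  intros Hl. unfold ZNk. rewrite filter_In, In_boxes. unfold inZNk.
  rewrite Bool.andb_true_iff, !Z.eqb_eq. fold (zsum u). rewrite zsum_abs.
  pose proof (zsum_pos_neg u). split.
  - intros [_ [H1 H2]]. lia.
  - intros [H1 H2]. split; [split; auto | split; lia].
    eapply Forall_impl; [| apply abs_le_zsum_abs]. intros z Hz. rewrite zsum_abs in Hz. lia.
Qed.

Lemma ZNk_length N k u : In u (ZNk N k) -> length u = N.
Proof. unfold ZNk. rewrite filter_In, In_boxes. tauto. Qed.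

Lemma ZNk_incl_boxes N k B : (2 * k <= B)%nat -> incl (ZNk N k) (boxes N B).
Proof.
  intros HB u. unfold ZNk. rewrite filter_In, !In_boxes. intros [[H1 H2] _].
  split; auto. eapply Forall_impl; [| exact H2]. intros z Hz; simpl in *. lia.
Qed.

Fixpoint compositions (m r : nat) : list (list Z) :=
  match m with
  | O => if Nat.eqb r 0 then nil :: nil else nil
  | S m' => flat_map (fun a => map (cons (Z.of_nat a)) (compositions m' (r - a))) (seq 0 (S r))
  end.

Lemma In_compositions m r c :
  In c (compositions m r) <-> length c = m /\ nonneg c /\ zsum c = Z.of_nat r.
Proof.
  revert r c; induction m; intros r c.
  - simpl. destruct (Nat.eqb_spec r 0); simpl.
    + subst. split; [intros [<- | []]; repeat split; constructor |].
      intros [H _]. destruct c; simpl in H; try lia; auto.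
    + split; [intros [] |]. intros [H [_ H2]]. destruct c; simpl in *; try lia.
  - cbn [compositions]. rewrite in_flat_map. split.
    + intros [a [Ha Hc]]. apply in_map_iff in Hc as [w [<- Hw]].
      apply IHm in Hw as [H1 [H2 H3]]. apply in_seq in Ha.
      unfold zsum in *; simpl. repeat split; auto; [constructor; auto; lia | lia].
    + intros [Hl [HF Hs]]. destruct c as [|a w]; simpl in Hl; try lia.
      inversion HF; subst. pose proof (zsum_nonneg _ H2). unfold zsum in *; simpl in Hs.
      exists (Z.to_nat a). split; [apply in_seq; lia |].
      replace a with (Z.of_nat (Z.to_nat a)) at 1 by lia.
      apply in_map, IHm. repeat split; [lia | exact H2 | unfold zsum; lia].
Qed.

Lemma NoDup_compositions m r : NoDup (compositions m r).
Proof.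
  revert r; induction m; intros r.
  - simpl; destruct (Nat.eqb r 0); repeat constructor; auto.
  - cbn [compositions]. apply NoDup_flat_map_disjoint; [apply seq_NoDup | intros; apply NoDup_map_cons, IHm |].
    intros a a' x _ _ H1 H2. apply in_map_iff in H1 as [? [<- _]], H2 as [? [H _]].
    injection H. lia.
Qed.

Definition pair_diff (p : list Z * list Z) : list Z := vsub (fst p) (snd p).

Lemma pair_diff_fiber N n u a b : length u = N ->
  In a (compositions N n) /\ In b (compositions N n) /\ vsub a b = u <->
  zsum u = 0%Z /\ (zsum (vpos u) <= Z.of_nat n)%Z /\
  exists c, In c (compositions N (n - Z.to_nat (zsum (vpos u)))) /\
    a = vadd (vpos u) c /\ b = vadd (vneg u) c.
Proof.
  intros Hu. pose proof (zsum_nonneg _ (vpos_nonneg u)). pose proof (zsum_pos_neg u).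
  split.
  - intros [Ha [Hb <-]].
    apply In_compositions in Ha as [La [Na Sa]], Hb as [Lb [Nb Sb]].
    destruct (vsub_decomp a b) as [Ea Eb]; [lia |].
    pose proof (zsum_nonneg _ (vmin_nonneg _ _ Na Nb)).
    assert (Hab : zsum (vsub a b) = 0%Z) by (rewrite zsum_vsub; lia).
    rewrite Ea, zsum_vadd in Sa
      by (unfold vpos; rewrite length_map, vmin_length, vsub_length; lia).
    repeat split; [lia | lia |]. exists (vmin a b). repeat split; auto.
    apply In_compositions. rewrite vmin_length. repeat split; [lia | apply vmin_nonneg; auto | lia].
  - intros [Hz [Hle [c [Hc [-> ->]]]]]. apply In_compositions in Hc as [Lc [Nc Sc]].
    assert (Lp : length (vpos u) = length c) by (unfold vpos; rewrite length_map; lia).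
    assert (Ln : length (vneg u) = length c) by (unfold vneg; rewrite length_map; lia).
    repeat split; [apply In_compositions .. | apply vsub_vadd_pos_neg; lia];
      rewrite vadd_length; repeat split; try lia.
    + apply vadd_nonneg; [apply vpos_nonneg | auto].
    + rewrite zsum_vadd by auto. lia.
    + apply vadd_nonneg; [apply vneg_nonneg | auto].
    + rewrite zsum_vadd by auto. lia.
Qed.

Lemma count_pair_diff N n u : length u = N ->
  count_occ zlist_dec (map pair_diff (list_prod (compositions N n) (compositions N n))) u =
  if (Z.eqb (zsum u) 0 && Z.leb (zsum (vpos u)) (Z.of_nat n))%bool
  then length (compositions N (n - Z.to_nat (zsum (vpos u)))) else 0%nat.
Proof.
  intros Hu. rewrite count_occ_map_filter.
  set (P := fun p => if zlist_dec (pair_diff p) u then true else false).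
  assert (HP : forall a b, In (a, b) (list_prod (compositions N n) (compositions N n)) /\
                 P (a, b) = true <->
               In a (compositions N n) /\ In b (compositions N n) /\ vsub a b = u).
  { intros a b. unfold P, pair_diff; simpl. rewrite in_prod_iff.
    destruct (zlist_dec (vsub a b) u); split; intros; intuition congruence. }
  destruct (Z.eqb_spec (zsum u) 0); destruct (Z.leb_spec (zsum (vpos u)) (Z.of_nat n)); simpl.
  - set (g := fun c => (vadd (vpos u) c, vadd (vneg u) c)).
    rewrite <- (length_map g). apply Permutation_length, NoDup_Permutation.
    + apply NoDup_filter, NoDup_list_prod; apply NoDup_compositions.
    + apply NoDup_map_NoDup_ForallPairs; [| apply NoDup_compositions].
      intros x y Hx Hy E. apply In_compositions in Hx, Hy. injection E as E _.
      apply (vadd_inj (vpos u)); auto; unfold vpos; rewrite length_map; lia.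
    + intros [a b]. rewrite filter_In, HP, pair_diff_fiber, in_map_iff by auto. unfold g.
      split.
      * intros [_ [_ [c [Hc [-> ->]]]]]. eauto.
      * intros [c [E Hc]]. injection E as <- <-. repeat split; eauto; lia.
  all: rewrite filter_all_false; auto; intros [a b] Hab; destruct (P (a, b)) eqn:E; auto;
    apply (conj Hab), HP, pair_diff_fiber in E; auto; lia.
Qed.

Definition ncomp (m r : nat) : nat := length (compositions m r).

Lemma ncomp_S m r : ncomp (S m) r = list_sum (map (fun a => ncomp m (r - a)) (seq 0 (S r))).
Proof.
  unfold ncomp; cbn [compositions]. rewrite length_flat_map. f_equal.
  apply map_ext. intros. apply length_map.
Qed.

Lemma ncomp_pascal m r : ncomp (S m) (S r) = (ncomp (S m) r + ncomp m (S r))%nat.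
Proof.
  rewrite (ncomp_S m (S r)), (ncomp_S m r).
  change (seq 0 (S (S r))) with (0 :: seq 1 (S r))%nat. unfold list_sum.
  rewrite <- seq_shift. cbn [map fold_right]. rewrite map_map. simpl. lia.
Qed.

Lemma ncomp_S_0 m : ncomp (S m) 0 = 1%nat.
Proof.
  induction m; [reflexivity |]. rewrite ncomp_S. simpl. now rewrite IHm.
Qed.

Lemma ncomp_1 r : ncomp 1 r = 1%nat.
Proof. induction r; [reflexivity |]. now rewrite ncomp_pascal, IHr. Qed.

Lemma ncomp_fact m r : (ncomp (S m) r * fact r * fact m = fact (r + m))%nat.
Proof.
  revert r; induction m; intros r.
  - rewrite ncomp_1, Nat.add_0_r. simpl. lia.
  - induction r.
    + rewrite ncomp_S_0. simpl. lia.
    + rewrite ncomp_pascal.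
      specialize (IHm (S r)).
      replace (S r + S m)%nat with (S (r + S m)) by lia.
      replace (S r + m)%nat with (r + S m)%nat in IHm by lia.
      cbn [fact] in *. remember (fact (r + S m)) as X. nia.
Qed.

Lemma ncomp_pos m r : (0 < ncomp (S m) r)%nat.
Proof.
  pose proof (ncomp_fact m r). pose proof (lt_O_fact (r + m)).
  destruct (ncomp (S m) r); simpl in *; lia.
Qed.

Lemma ncomp_ratio m r : (S r * ncomp (S m) (S r) = (S r + m) * ncomp (S m) r)%nat.
Proof.
  pose proof (ncomp_fact m r) as H1. pose proof (ncomp_fact m (S r)) as H2.
  replace (S r + m)%nat with (S (r + m)) in * by lia.
  cbn [fact] in H2. rewrite <- H1 in H2.
  pose proof (lt_O_fact r). pose proof (lt_O_fact m).
  apply (Nat.mul_cancel_r _ _ (fact r * fact m)); nia.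
Qed.

Lemma poch_neg_nz n m k : (k <= n)%nat -> poch (- INR n - INR m) k <> 0.
Proof.
  induction k; intros Hk; simpl; [lra |].
  apply Rmult_integral_contrapositive. split; [apply IHk; lia |].
  assert (INR k < INR n) by (apply lt_INR; lia). pose proof (pos_INR m). lra.
Qed.

Lemma coefs_ncomp n m k : (k <= n)%nat ->
  coefs n (INR m) k = INR (ncomp (S m) (n - k)) / INR (ncomp (S m) n).
Proof.
  assert (HL : INR (ncomp (S m) n) <> 0) by (apply not_0_INR; pose proof (ncomp_pos m n); lia).
  induction k; intros Hk.
  - unfold coefs; simpl. rewrite Nat.sub_0_r. field. auto.
  - assert (Hkn : INR k < INR n) by (apply lt_INR; lia). pose proof (pos_INR m).
    assert (Hl : INR (ncomp (S m) (n - S k)) =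
                 (INR n - INR k) * INR (ncomp (S m) (n - k)) / (INR n - INR k + INR m)).
    { pose proof (ncomp_ratio m (n - S k)) as R.
      replace (S (n - S k)) with (n - k)%nat in R by lia.
      apply (f_equal INR) in R. rewrite !mult_INR, plus_INR, minus_INR in R by lia.
      apply (Rmult_eq_reg_l (INR n - INR k + INR m)); [| lra].
      rewrite <- R. field. lra. }
    unfold coefs in *. cbn [poch]. rewrite Hl.
    pose proof (poch_neg_nz n m k ltac:(lia)).
    replace (poch (- INR n) k * (- INR n + INR k) / (poch (- INR n - INR m) k * (- INR n - INR m + INR k)))
      with (poch (- INR n) k / poch (- INR n - INR m) k * ((INR n - INR k) / (INR n - INR k + INR m)))
      by (field; split; lra).
    rewrite IHk by lia. field. split; lra.
Qed.

Lemma count_occ_ZNk N k u : length u = N ->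
  count_occ zlist_dec (ZNk N k) u =
  if (Z.eqb (zsum u) 0 && Nat.eqb k (Z.to_nat (zsum (vpos u))))%bool then 1%nat else 0%nat.
Proof.
  intros Hu. pose proof (zsum_nonneg _ (vpos_nonneg u)) as Hpos.
  destruct (in_dec zlist_dec u (ZNk N k)) as [H | H].
  - rewrite (proj1 (NoDup_count_occ' _ _) (NoDup_ZNk N k) u H).
    apply In_ZNk in H as [-> E]; auto. rewrite E, Nat2Z.id, Nat.eqb_refl. reflexivity.
  - rewrite (proj1 (count_occ_not_In _ _ _) H). rewrite In_ZNk in H by auto.
    destruct (Z.eqb_spec (zsum u) 0); destruct (Nat.eqb_spec k (Z.to_nat (zsum (vpos u))));
      simpl; auto. exfalso. apply H. split; lia.
Qed.

Lemma coefs_count_ZNk m n u : length u = S m ->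
  sumR (map (fun k => coefs n (INR m) k * INR (count_occ zlist_dec (ZNk (S m) k) u)) (seq 0 (S n))) =
  / INR (ncomp (S m) n) *
  INR (count_occ zlist_dec (map pair_diff (list_prod (compositions (S m) n) (compositions (S m) n))) u).
Proof.
  intros Hu. rewrite count_pair_diff by auto.
  set (k0 := Z.to_nat (zsum (vpos u))).
  pose proof (zsum_nonneg _ (vpos_nonneg u)).
  rewrite (sumR_ext _ (fun k => if Nat.eq_dec k k0 then
                                  (if Z.eqb (zsum u) 0 then coefs n (INR m) k else 0) else 0)).
  2:{ intros k _. rewrite count_occ_ZNk by auto. fold k0.
      destruct (Z.eqb (zsum u) 0), (Nat.eqb_spec k k0), (Nat.eq_dec k k0); simpl; try lia; lra. }
  rewrite (sumR_indicator Nat.eq_dec (fun k => if Z.eqb (zsum u) 0 then coefs n (INR m) k else 0))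
    by apply seq_NoDup.
  destruct (in_dec Nat.eq_dec k0 (seq 0 (S n))) as [Hk | Hk]; rewrite in_seq in Hk;
    destruct (Z.eqb (zsum u) 0); destruct (Z.leb_spec (zsum (vpos u)) (Z.of_nat n));
    cbn [andb INR]; try lra; try lia.
  rewrite coefs_ncomp by lia. unfold ncomp. lra.
Qed.

Lemma sigma_sum_pairs m n (F : list Z -> R) :
  sumR (map (fun k => coefs n (INR m) k * sumR (map F (ZNk (S m) k))) (seq 0 (S n))) =
  / INR (ncomp (S m) n) *
  sumR (map (fun p => F (pair_diff p)) (list_prod (compositions (S m) n) (compositions (S m) n))).
Proof.
  set (U := boxes (S m) (2 * n)).
  assert (NU : NoDup U) by apply NoDup_boxes.
  rewrite (sumR_ext _ (fun k => sumR (map (fun u =>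
             coefs n (INR m) k * INR (count_occ zlist_dec (ZNk (S m) k) u) * F u) U))).
  2:{ intros k Hk. apply in_seq in Hk. rewrite (sumR_regroup zlist_dec F U) by
        (auto; apply ZNk_incl_boxes; lia).
      rewrite <- sumR_scal. apply sumR_ext. intros; lra. }
  rewrite sumR_exchange, <- (map_map pair_diff F).
  rewrite (sumR_regroup zlist_dec F U); auto.
  2:{ intros u Hu. apply in_map_iff in Hu as [[a b] [<- Hp]].
      apply in_prod_iff in Hp as [Ha Hb].
      apply In_compositions in Ha as [La [Na Sa]], Hb as [Lb [Nb Sb]].
      apply In_boxes. unfold pair_diff; simpl. rewrite vsub_length. split; [lia |].
      apply nonneg_le_zsum in Na, Nb. rewrite Sa in Na. rewrite Sb in Nb.
      eapply Forall_vsub; [| exact Na | exact Nb]. intros x y Hx Hy; simpl in *. lia. }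
  rewrite <- sumR_scal. apply sumR_ext. intros u Hu.
  apply In_boxes in Hu as [Lu _].
  rewrite <- Rmult_assoc, <- (coefs_count_ZNk m n u Lu), Rmult_comm, <- sumR_scal.
  apply sumR_ext. intros; lra.
Qed.

Lemma dotZ_vsub a b th i : length a = length b ->
  dotZ (vsub a b) th i = dotZ a th i - dotZ b th i.
Proof.
  revert b i; induction a; destruct b; simpl; intros i H; try discriminate; [lra |].
  rewrite IHa, minus_IZR by lia. lra.
Qed.

Definition hcos (N n : nat) (th : nat -> R) : R :=
  sumR (map (fun a => cos (dotZ a th 0)) (compositions N n)).
Definition hsin (N n : nat) (th : nat -> R) : R :=
  sumR (map (fun a => sin (dotZ a th 0)) (compositions N n)).

Lemma sigma_re_square m n th :
  sigma_re (S m) n (INR m) th = (hcos (S m) n th ^ 2 + hsin (S m) n th ^ 2) / INR (ncomp (S m) n).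
Proof.
  unfold sigma_re, S_re. rewrite (sigma_sum_pairs m n (fun al => cos (dotZ al th 0))).
  unfold pair_diff. rewrite (sumR_list_prod (fun a b => cos (dotZ (vsub a b) th 0))).
  rewrite (sumR_ext _ (fun a =>
      sumR (map (fun b => cos (dotZ a th 0) * cos (dotZ b th 0)) (compositions (S m) n)) +
      sumR (map (fun b => sin (dotZ a th 0) * sin (dotZ b th 0)) (compositions (S m) n)))).
  2:{ intros a Ha. rewrite <- sumR_plus. apply sumR_ext. intros b Hb.
      apply In_compositions in Ha, Hb. rewrite dotZ_vsub by lia. apply cos_minus. }
  rewrite sumR_plus. unfold hcos, hsin. rewrite <- !sumR_mul. unfold Rdiv. ring.
Qed.

Lemma sigma_im_zero m n th : sigma_im (S m) n (INR m) th = 0.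
Proof.
  unfold sigma_im, S_im. rewrite (sigma_sum_pairs m n (fun al => sin (dotZ al th 0))).
  unfold pair_diff. rewrite (sumR_list_prod (fun a b => sin (dotZ (vsub a b) th 0))).
  rewrite (sumR_ext _ (fun a =>
      sumR (map (fun b => sin (dotZ a th 0) * cos (dotZ b th 0)) (compositions (S m) n)) +
      - sumR (map (fun b => cos (dotZ a th 0) * sin (dotZ b th 0)) (compositions (S m) n)))).
  2:{ intros a Ha. rewrite <- sumR_opp, <- sumR_plus. apply sumR_ext. intros b Hb.
      apply In_compositions in Ha, Hb. rewrite dotZ_vsub, sin_minus by lia. ring. }
  rewrite sumR_plus, sumR_opp, <- !sumR_mul. ring.
Qed.

Lemma sigma_re_nonneg m n th : 0 <= sigma_re (S m) n (INR m) th.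
Proof.
  rewrite sigma_re_square. apply Rmult_le_pos.
  - pose proof (pow2_ge_0 (hcos (S m) n th)). pose proof (pow2_ge_0 (hsin (S m) n th)). lra.
  - apply Rlt_le, Rinv_0_lt_compat, lt_0_INR, ncomp_pos.
Qed.

Definition coord_close (del : R) (th th' : nat -> R) : Prop :=
  forall i, Rabs (th i - th' i) < del.

Definition unif_cont (g : (nat -> R) -> R) : Prop :=
  forall eps, 0 < eps -> exists del, 0 < del /\
    forall th th', coord_close del th th' -> Rabs (g th - g th') <= eps.

Definition bounded (g : (nat -> R) -> R) : Prop := exists B, forall th, Rabs (g th) <= B.

Lemma unif_cont_const c : unif_cont (fun _ => c).
Proof. intros e He. exists 1. split; [lra |]. intros. rewrite Rminus_diag, Rabs_R0. lra. Qed.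

Lemma unif_cont_ext g1 g2 : (forall x, g1 x = g2 x) -> unif_cont g1 -> unif_cont g2.
Proof.
  intros E H e He. destruct (H e He) as [d [Hd H']]. exists d. split; auto.
  intros. rewrite <- !E. auto.
Qed.

Lemma unif_cont_lin a g1 g2 : unif_cont g1 -> unif_cont g2 -> unif_cont (fun x => a * g1 x + g2 x).
Proof.
  intros H1 H2 e He.
  pose proof (Rabs_pos a).
  destruct (H1 (e / 2 / (Rabs a + 1))) as [d1 [Hd1 H1']]; [apply Rdiv_lt_0_compat; lra |].
  destruct (H2 (e / 2)) as [d2 [Hd2 H2']]; [lra |].
  exists (Rmin d1 d2). split; [apply Rmin_pos; auto |].
  intros th th' Hc.
  assert (C1 : coord_close d1 th th')
    by (intros i; specialize (Hc i); pose proof (Rmin_l d1 d2); lra).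
  assert (C2 : coord_close d2 th th')
    by (intros i; specialize (Hc i); pose proof (Rmin_r d1 d2); lra).
  specialize (H1' _ _ C1). specialize (H2' _ _ C2).
  replace (a * g1 th + g2 th - (a * g1 th' + g2 th'))
    with (a * (g1 th - g1 th') + (g2 th - g2 th')) by ring.
  eapply Rle_trans; [apply Rabs_triang |]. rewrite Rabs_mult.
  assert (Rabs a * Rabs (g1 th - g1 th') <= e / 2).
  { apply Rle_trans with ((Rabs a + 1) * (e / 2 / (Rabs a + 1))).
    - apply Rmult_le_compat; try apply Rabs_pos; lra.
    - right. field. lra. }
  lra.
Qed.

Lemma unif_cont_plus g1 g2 : unif_cont g1 -> unif_cont g2 -> unif_cont (fun x => g1 x + g2 x).
Proof.
  intros H1 H2. apply (unif_cont_ext (fun x => 1 * g1 x + g2 x)); [intros; ring |].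
  now apply unif_cont_lin.
Qed.

Lemma unif_cont_scal a g : unif_cont g -> unif_cont (fun x => a * g x).
Proof.
  intros H. apply (unif_cont_ext (fun x => a * g x + 0)); [intros; ring |].
  apply unif_cont_lin; auto using unif_cont_const.
Qed.

Lemma unif_cont_mult g1 g2 : unif_cont g1 -> unif_cont g2 -> bounded g1 -> bounded g2 ->
  unif_cont (fun x => g1 x * g2 x).
Proof.
  intros H1 H2 [B1 HB1] [B2 HB2] e He.
  assert (0 <= B1) by (specialize (HB1 (fun _ => 0)); pose proof (Rabs_pos (g1 (fun _ => 0))); lra).
  assert (0 <= B2) by (specialize (HB2 (fun _ => 0)); pose proof (Rabs_pos (g2 (fun _ => 0))); lra).
  destruct (H1 (e / 2 / (B2 + 1))) as [d1 [Hd1 H1']]; [apply Rdiv_lt_0_compat; lra |].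
  destruct (H2 (e / 2 / (B1 + 1))) as [d2 [Hd2 H2']]; [apply Rdiv_lt_0_compat; lra |].
  exists (Rmin d1 d2). split; [apply Rmin_pos; auto |].
  intros th th' Hc.
  assert (C1 : coord_close d1 th th')
    by (intros i; specialize (Hc i); pose proof (Rmin_l d1 d2); lra).
  assert (C2 : coord_close d2 th th')
    by (intros i; specialize (Hc i); pose proof (Rmin_r d1 d2); lra).
  specialize (H1' _ _ C1). specialize (H2' _ _ C2).
  replace (g1 th * g2 th - g1 th' * g2 th')
    with ((g1 th - g1 th') * g2 th + g1 th' * (g2 th - g2 th')) by ring.
  eapply Rle_trans; [apply Rabs_triang |]. rewrite !Rabs_mult.
  assert (Rabs (g1 th - g1 th') * Rabs (g2 th) <= e / 2).
  { apply Rle_trans with ((e / 2 / (B2 + 1)) * (B2 + 1)).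
    - apply Rmult_le_compat; try apply Rabs_pos; auto. specialize (HB2 th); lra.
    - right. field. lra. }
  assert (Rabs (g1 th') * Rabs (g2 th - g2 th') <= e / 2).
  { apply Rle_trans with ((B1 + 1) * (e / 2 / (B1 + 1))).
    - apply Rmult_le_compat; try apply Rabs_pos; auto. specialize (HB1 th'); lra.
    - right. field. lra. }
  lra.
Qed.

Lemma unif_cont_abs g : unif_cont g -> unif_cont (fun x => Rabs (g x)).
Proof.
  intros H e He. destruct (H e He) as [d [Hd H']]. exists d. split; auto.
  intros. eapply Rle_trans; [apply Rabs_triang_inv2 | auto].
Qed.

Lemma unif_cont_sum {A} (G : A -> (nat -> R) -> R) L :
  (forall x, In x L -> unif_cont (G x)) -> unif_cont (fun th => sumR (map (fun x => G x th) L)).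
Proof.
  induction L; simpl; intros H; [apply unif_cont_const |].
  apply unif_cont_plus; auto.
Qed.

Lemma unif_cont_lipschitz g K : 0 <= K ->
  (forall th th' del, 0 < del -> coord_close del th th' -> Rabs (g th - g th') <= K * del) ->
  unif_cont g.
Proof.
  intros HK H e He. exists (e / (K + 1)). split; [apply Rdiv_lt_0_compat; lra |].
  intros th th' Hc. apply Rle_trans with (K * (e / (K + 1))).
  - apply H; auto. apply Rdiv_lt_0_compat; lra.
  - apply Rle_trans with ((K + 1) * (e / (K + 1))).
    + apply Rmult_le_compat_r; [left; apply Rdiv_lt_0_compat |]; lra.
    + right; field; lra.
Qed.

Lemma bounded_const c : bounded (fun _ => c).
Proof. exists (Rabs c). intros; lra. Qed.

Lemma bounded_ext g1 g2 : (forall x, g1 x = g2 x) -> bounded g1 -> bounded g2.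
Proof. intros E [B H]. exists B. intros; rewrite <- E; auto. Qed.

Lemma bounded_plus g1 g2 : bounded g1 -> bounded g2 -> bounded (fun x => g1 x + g2 x).
Proof.
  intros [B1 H1] [B2 H2]. exists (B1 + B2). intros th.
  eapply Rle_trans; [apply Rabs_triang |]. specialize (H1 th); specialize (H2 th); lra.
Qed.

Lemma bounded_mult g1 g2 : bounded g1 -> bounded g2 -> bounded (fun x => g1 x * g2 x).
Proof.
  intros [B1 H1] [B2 H2]. exists (B1 * B2). intros th. rewrite Rabs_mult.
  apply Rmult_le_compat; try apply Rabs_pos; auto.
Qed.

Lemma bounded_scal a g : bounded g -> bounded (fun x => a * g x).
Proof. intros. apply (bounded_mult (fun _ => a) g); auto using bounded_const. Qed.

Lemma bounded_sum {A} (G : A -> (nat -> R) -> R) L :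
  (forall x, In x L -> bounded (G x)) -> bounded (fun th => sumR (map (fun x => G x th) L)).
Proof.
  induction L; simpl; intros H; [apply bounded_const |].
  apply bounded_plus; auto.
Qed.

Lemma bounded_cos h : bounded (fun x => cos (h x)).
Proof. exists 1. intros. pose proof (COS_bound (h th)). apply Rabs_le; lra. Qed.

Lemma cos_lipschitz x y : Rabs (cos x - cos y) <= Rabs (x - y).
Proof.
  destruct (MVT_abs cos (fun t => - sin t) y x) as [c [Hc _]].
  { intros; apply derivable_pt_lim_cos. }
  rewrite Hc, Rabs_Ropp. pose proof (SIN_bound c).
  rewrite <- (Rmult_1_l (Rabs (x - y))) at 2.
  apply Rmult_le_compat_r; [apply Rabs_pos | apply Rabs_le; lra].
Qed.

Lemma unif_cont_cos_lipschitz (h : (nat -> R) -> R) K : 0 <= K ->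
  (forall th th' del, 0 < del -> coord_close del th th' -> Rabs (h th - h th') <= K * del) ->
  unif_cont (fun x => cos (h x)).
Proof.
  intros HK H. apply (unif_cont_lipschitz _ K); auto.
  intros. eapply Rle_trans; [apply cos_lipschitz | auto].
Qed.

Lemma two_PI_pos : 0 < 2 * PI.
Proof. pose proof PI_RGT_0; lra. Qed.

Lemma Rint_RInt h a b : ex_RInt h a b -> Rint h a b = RInt h a b.
Proof.
  intros H. unfold Rint.
  assert (Hs : exists I, exists pr : Riemann_integrable h a b, RiemannInt pr = I)
    by (exists (RiemannInt (ex_RInt_Reals_0 _ _ _ H)); eauto).
  destruct (epsilon_spec (inhabits 0) _ Hs) as [pr <-].
  symmetry. apply RInt_Reals.
Qed.

Lemma coord_close_upd del th j t t' :
  0 < del -> Rabs (t - t') < del -> coord_close del (upd th j t) (upd th j t').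
Proof.
  intros Hd Ht i. unfold upd. destruct (Nat.eqb i j); auto.
  rewrite Rminus_diag, Rabs_R0. auto.
Qed.

Lemma coord_close_upd2 del th th' j t :
  coord_close del th th' -> coord_close del (upd th j t) (upd th' j t).
Proof.
  intros H i. unfold upd. destruct (Nat.eqb i j); auto.
  rewrite Rminus_diag, Rabs_R0. specialize (H 0%nat).
  pose proof (Rabs_pos (th 0%nat - th' 0%nat)). lra.
Qed.

Lemma ex_RInt_slice g th0 j a b : unif_cont g -> ex_RInt (fun t => g (upd th0 j t)) a b.
Proof.
  intros Hg. apply (ex_RInt_continuous (V := R_CompleteNormedModule)). intros t _.
  apply continuity_pt_filterlim.
  intros eps Heps. destruct (Hg (eps / 2)) as [del [Hd H]]; [lra |].
  exists del. split; auto. intros x [_ Hx]. simpl in *. unfold R_dist in *.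
  assert (Rabs (g (upd th0 j x) - g (upd th0 j t)) <= eps / 2)
    by (apply H, coord_close_upd; auto).
  lra.
Qed.

Lemma IntTorus_S_RInt m g th : unif_cont (IntTorus m g) ->
  IntTorus (S m) g th = / (2 * PI) * RInt (fun t => IntTorus m g (upd th m t)) 0 (2 * PI).
Proof. intros H. cbn [IntTorus]. now rewrite Rint_RInt by (apply ex_RInt_slice, H). Qed.

Lemma IntTorus_modulus g m eps del : unif_cont g ->
  (forall th th', coord_close del th th' -> Rabs (g th - g th') <= eps) ->
  forall th th', coord_close del th th' -> Rabs (IntTorus m g th - IntTorus m g th') <= eps.
Proof.
  intros Hg. revert eps del. induction m; intros eps del H th th' Hc; [simpl; auto |].
  assert (HU : unif_cont (IntTorus m g)).
  { intros e He. destruct (Hg e He) as [d [Hd Hd']]. exists d. split; auto.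
    intros; eapply IHm; eauto. }
  rewrite !IntTorus_S_RInt by auto. pose proof two_PI_pos.
  rewrite <- Rmult_minus_distr_l, Rabs_mult, Rabs_right
    by (apply Rle_ge, Rlt_le, Rinv_0_lt_compat; lra).
  rewrite <- (RInt_minus (V := R_CompleteNormedModule)) by (apply ex_RInt_slice; auto).
  assert (Rabs (RInt (fun t => minus (IntTorus m g (upd th m t)) (IntTorus m g (upd th' m t)))
                  0 (2 * PI)) <= (2 * PI - 0) * eps).
  { apply abs_RInt_le_const; [lra | |].
    - apply (ex_RInt_minus (V := R_CompleteNormedModule)); apply ex_RInt_slice; auto.
    - intros t _. eapply IHm; eauto. apply coord_close_upd2; auto. }
  apply (Rmult_le_reg_l (2 * PI)); auto.
  rewrite <- Rmult_assoc, Rinv_r, Rmult_1_l by lra. now rewrite Rminus_0_r in H1.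
Qed.

Lemma IntTorus_unif_cont g m : unif_cont g -> unif_cont (IntTorus m g).
Proof.
  intros Hg e He. destruct (Hg e He) as [d [Hd Hd']]. exists d. split; auto.
  intros; eapply IntTorus_modulus; eauto.
Qed.

Lemma IntTorus_ext m g1 g2 th : (forall x, g1 x = g2 x) -> IntTorus m g1 th = IntTorus m g2 th.
Proof. intros H. now replace g1 with g2 by (symmetry; apply functional_extensionality; auto). Qed.

Lemma IntTorus_lin m : forall g1 g2 a th, unif_cont g1 -> unif_cont g2 ->
  IntTorus m (fun x => a * g1 x + g2 x) th = a * IntTorus m g1 th + IntTorus m g2 th.
Proof.
  induction m; intros g1 g2 a th H1 H2; [reflexivity |].
  pose proof (IntTorus_unif_cont g1 m H1). pose proof (IntTorus_unif_cont g2 m H2).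
  rewrite !IntTorus_S_RInt by (auto; apply IntTorus_unif_cont, unif_cont_lin; auto).
  rewrite (RInt_ext _ (fun t => plus (scal a (IntTorus m g1 (upd th m t))) (IntTorus m g2 (upd th m t))))
    by (intros; apply IHm; auto).
  rewrite (RInt_plus (V := R_CompleteNormedModule)), (RInt_scal (V := R_CompleteNormedModule)).
  - unfold plus, scal; simpl. unfold mult; simpl. ring.
  - apply ex_RInt_slice; auto.
  - apply (ex_RInt_scal (V := R_CompleteNormedModule)), ex_RInt_slice; auto.
  - apply ex_RInt_slice; auto.
Qed.

Lemma IntTorus_const m c th : IntTorus m (fun _ => c) th = c.
Proof.
  revert th; induction m; intros th; [reflexivity |].
  rewrite IntTorus_S_RInt by (apply IntTorus_unif_cont, unif_cont_const).
  rewrite (RInt_ext _ (fun _ => c)) by (intros; apply IHm).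
  rewrite RInt_const. unfold scal; simpl. unfold mult; simpl.
  pose proof two_PI_pos. field. lra.
Qed.

Lemma IntTorus_le m : forall g1 g2 th, unif_cont g1 -> unif_cont g2 -> (forall x, g1 x <= g2 x) ->
  IntTorus m g1 th <= IntTorus m g2 th.
Proof.
  induction m; intros g1 g2 th H1 H2 Hle; [simpl; auto |].
  pose proof (IntTorus_unif_cont g1 m H1). pose proof (IntTorus_unif_cont g2 m H2).
  rewrite !IntTorus_S_RInt by auto. pose proof two_PI_pos.
  apply Rmult_le_compat_l; [apply Rlt_le, Rinv_0_lt_compat; lra |].
  apply RInt_le; [lra | apply ex_RInt_slice; auto .. |].
  intros; apply IHm; auto.
Qed.

Lemma IntTorus_plus m g1 g2 th : unif_cont g1 -> unif_cont g2 ->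
  IntTorus m (fun x => g1 x + g2 x) th = IntTorus m g1 th + IntTorus m g2 th.
Proof.
  intros. rewrite <- (Rmult_1_l (IntTorus m g1 th)), <- IntTorus_lin; auto.
  apply IntTorus_ext. intros; ring.
Qed.

Lemma IntTorus_scal m a g th : unif_cont g -> IntTorus m (fun x => a * g x) th = a * IntTorus m g th.
Proof.
  intros. rewrite <- (Rplus_0_r (a * _)), <- (IntTorus_const m 0 th), <- IntTorus_lin;
    auto using unif_cont_const.
  apply IntTorus_ext. intros; ring.
Qed.

Lemma IntTorus_sum {A} m (G : A -> (nat -> R) -> R) L th :
  (forall x, In x L -> unif_cont (G x)) ->
  IntTorus m (fun ph => sumR (map (fun x => G x ph) L)) th =
  sumR (map (fun x => IntTorus m (G x) th) L).
Proof.
  induction L; simpl; intros H; [apply IntTorus_const |].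
  rewrite IntTorus_plus, IHL; auto. apply unif_cont_sum; auto.
Qed.

Lemma IntTorus_abs m g th : unif_cont g ->
  Rabs (IntTorus m g th) <= IntTorus m (fun x => Rabs (g x)) th.
Proof.
  intros Hg. apply Rabs_le. split.
  - rewrite <- (Rmult_1_l (IntTorus m (fun x => Rabs (g x)) th)).
    rewrite Ropp_mult_distr_l, <- IntTorus_scal by (apply unif_cont_abs; auto).
    apply IntTorus_le; auto using unif_cont_scal, unif_cont_abs.
    intros x. pose proof (Rle_abs (- g x)). rewrite Rabs_Ropp in H. lra.
  - apply IntTorus_le; auto using unif_cont_abs. intros; apply Rle_abs.
Qed.

Definition zabs (al : list Z) : Z := fold_right Z.add 0%Z (map Z.abs al).

Lemma zabs_nonneg al : (0 <= zabs al)%Z.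
Proof. induction al; unfold zabs in *; simpl; lia. Qed.

Lemma dotZ_lipschitz al th th' i del : 0 < del -> coord_close del th th' ->
  Rabs (dotZ al th i - dotZ al th' i) <= IZR (zabs al) * del.
Proof.
  revert i; induction al; intros i Hd Hc; simpl.
  - rewrite Rminus_diag, Rabs_R0. unfold zabs; simpl; lra.
  - unfold zabs; simpl. fold (zabs al). rewrite plus_IZR.
    replace (IZR a * th i + dotZ al th (S i) - (IZR a * th' i + dotZ al th' (S i)))
      with (IZR a * (th i - th' i) + (dotZ al th (S i) - dotZ al th' (S i))) by ring.
    eapply Rle_trans; [apply Rabs_triang |]. rewrite Rabs_mult, <- abs_IZR.
    specialize (IHal (S i) Hd Hc).
    assert (IZR (Z.abs a) * Rabs (th i - th' i) <= IZR (Z.abs a) * del).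
    { apply Rmult_le_compat_l; [apply IZR_le; lia | left; apply Hc]. }
    lra.
Qed.

Lemma dotZ_subang al th ph i : dotZ al (subang th ph) i = dotZ al th i - dotZ al ph i.
Proof. revert i; induction al; intros i; simpl; [ring |]. rewrite IHal. unfold subang. ring. Qed.

Lemma dotZ_opp al ph i : dotZ (map Z.opp al) ph i = - dotZ al ph i.
Proof. revert i; induction al; intros i; simpl; [ring |]. rewrite IHal, opp_IZR. ring. Qed.

Lemma dotZ_vadd a b th i : length a = length b ->
  dotZ (vadd a b) th i = dotZ a th i + dotZ b th i.
Proof.
  revert b i; induction a; destruct b; simpl; intros i H; try discriminate; [lra |].
  rewrite IHa, plus_IZR by lia. ring.
Qed.

Lemma dotZ_at_zero al i : dotZ al (fun _ => 0) i = 0.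
Proof. revert i; induction al; intros i; simpl; [ring |]. rewrite IHal. ring. Qed.

Lemma dotZ_zeros g th i : List.Forall (fun z => z = 0%Z) g -> dotZ g th i = 0.
Proof. intros H; revert i; induction H; intros i; simpl; auto. subst. rewrite IHForall. ring. Qed.

Lemma dotZ_upd_lt g th j t i : (j < i)%nat -> dotZ g (upd th j t) i = dotZ g th i.
Proof.
  revert i; induction g; intros i H; simpl; auto.
  rewrite IHg by lia. unfold upd. destruct (Nat.eqb_spec i j); [lia | auto].
Qed.

Lemma dotZ_upd g th j t i : (i <= j)%nat ->
  dotZ g (upd th j t) i = dotZ g th i + IZR (nth (j - i) g 0%Z) * (t - th j).
Proof.
  revert i; induction g; intros i H; simpl.
  - destruct (j - i)%nat; simpl; ring.
  - unfold upd at 1. destruct (Nat.eqb_spec i j).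
    + subst. rewrite dotZ_upd_lt, Nat.sub_diag by lia. simpl. ring.
    + rewrite IHg by lia. replace (j - i)%nat with (S (j - S i)) by lia. simpl. ring.
Qed.

Lemma unif_cont_char g th : unif_cont (fun ph => cos (dotZ g (subang th ph) 0)).
Proof.
  apply (unif_cont_cos_lipschitz _ (IZR (zabs g))); [apply IZR_le, zabs_nonneg |].
  intros x y del Hd Hc. rewrite !dotZ_subang.
  replace (dotZ g th 0 - dotZ g x 0 - (dotZ g th 0 - dotZ g y 0))
    with (- (dotZ g x 0 - dotZ g y 0)) by ring.
  rewrite Rabs_Ropp. apply dotZ_lipschitz; auto.
Qed.

Lemma sin_period_Z a r : sin (IZR a * (2 * PI) + r) = sin r.
Proof.
  destruct (Z_le_gt_dec 0 a).
  - replace a with (Z.of_nat (Z.to_nat a)) by lia. rewrite <- INR_IZR_INZ.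
    rewrite <- (sin_period r (Z.to_nat a)). f_equal. ring.
  - replace a with (- Z.of_nat (Z.to_nat (- a)))%Z by lia. rewrite opp_IZR, <- INR_IZR_INZ.
    rewrite <- (sin_period (- INR (Z.to_nat (- a)) * (2 * PI) + r) (Z.to_nat (- a))).
    f_equal. ring.
Qed.

Lemma cos_period_Z z k : cos (z + 2 * PI * IZR k) = cos z.
Proof.
  rewrite <- !sin_shift, <- (sin_period_Z (- k) (PI / 2 - z)), opp_IZR. f_equal. ring.
Qed.

Lemma RInt_cos_lin a r :
  RInt (fun t => cos (IZR a * t + r)) 0 (2 * PI) = if Z.eqb a 0 then 2 * PI * cos r else 0.
Proof.
  destruct (Z.eqb_spec a 0) as [-> | Ha].
  - rewrite (RInt_ext _ (fun _ => cos r)) by (intros; f_equal; ring).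
    rewrite RInt_const. unfold scal; simpl; unfold mult; simpl. ring.
  - assert (Ha' : IZR a <> 0) by (apply not_0_IZR; auto).
    apply is_RInt_unique.
    set (f := fun t => sin (IZR a * t + r) / IZR a).
    assert (E : minus (f (2 * PI)) (f 0) = 0).
    { unfold minus, plus, opp, f; simpl.
      rewrite sin_period_Z, Rmult_0_r, Rplus_0_l. field; auto. }
    rewrite <- E at 2. apply (is_RInt_derive (V := R_CompleteNormedModule)).
    + intros x _. unfold f. auto_derive; auto. field; auto.
    + intros x _. apply continuity_pt_filterlim, derivable_continuous_pt. reg.
Qed.

Definition zero_upto (m : nat) (g : list Z) : bool :=
  forallb (fun i => Z.eqb (nth i g 0%Z) 0) (seq 0 m).

Lemma zero_upto_S m g : zero_upto (S m) g = (zero_upto m g && Z.eqb (nth m g 0%Z) 0)%bool.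
Proof. unfold zero_upto. rewrite seq_S, forallb_app. simpl. now rewrite Bool.andb_true_r. Qed.

Lemma zero_upto_opp m al : zero_upto m (map Z.opp al) = zero_upto m al.
Proof.
  unfold zero_upto. f_equal. apply functional_extensionality. intros i.
  change 0%Z with (Z.opp 0) at 1. rewrite map_nth. now destruct (nth i al 0%Z).
Qed.

Lemma zero_upto_length al :
  zero_upto (length al) al = true <-> List.Forall (fun z => z = 0%Z) al.
Proof.
  unfold zero_upto. rewrite forallb_forall, List.Forall_forall. split.
  - intros H x Hx. apply In_nth with (d := 0%Z) in Hx as [i [Hi <-]].
    apply Z.eqb_eq, H, in_seq. lia.
  - intros H i Hi. apply in_seq in Hi. apply Z.eqb_eq, H, nth_In. lia.
Qed.

(* Orthogonality of characters, one coordinate at a time. *)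
Lemma IntTorus_cos_char m : forall g c th0,
  IntTorus m (fun ph => cos (dotZ g ph 0 + c)) th0 =
  if zero_upto m g then cos (dotZ g th0 0 + c) else 0.
Proof.
  induction m; intros g c th0; [reflexivity |].
  cbn [IntTorus].
  replace (fun t => IntTorus m (fun ph => cos (dotZ g ph 0 + c)) (upd th0 m t))
    with (fun t => if zero_upto m g
                   then cos (IZR (nth m g 0%Z) * t + (dotZ g th0 0 + c - IZR (nth m g 0%Z) * th0 m))
                   else 0).
  2:{ apply functional_extensionality; intros t. rewrite IHm. destruct (zero_upto m g); auto.
      rewrite dotZ_upd, Nat.sub_0_r by lia. f_equal. ring. }
  pose proof two_PI_pos.
  rewrite zero_upto_S. destruct (zero_upto m g); simpl.
  - rewrite Rint_RInt, RInt_cos_lin.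
    + destruct (Z.eqb_spec (nth m g 0%Z) 0) as [-> | E]; [| ring].
      field_simplify; [f_equal; ring | lra].
    + apply (ex_RInt_continuous (V := R_CompleteNormedModule)). intros x _.
      apply continuity_pt_filterlim, derivable_continuous_pt. reg.
  - rewrite Rint_RInt by apply ex_RInt_const.
    rewrite RInt_const. unfold scal; simpl; unfold mult; simpl. ring.
Qed.

Lemma haar_int_char N g th : length g = N ->
  haar_int N (fun ph => cos (dotZ g (subang th ph) 0)) = if zero_upto N g then 1 else 0.
Proof.
  intros Hl. unfold haar_int.
  rewrite (IntTorus_ext _ _ (fun ph => cos (dotZ (map Z.opp g) ph 0 + dotZ g th 0)))
    by (intros x; rewrite dotZ_subang, dotZ_opp; f_equal; ring).
  rewrite IntTorus_cos_char, zero_upto_opp, dotZ_at_zero, Rplus_0_l.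
  destruct (zero_upto N g) eqn:E; auto.
  rewrite <- Hl in E. apply zero_upto_length in E.
  now rewrite dotZ_zeros, cos_0.
Qed.

Lemma zero_upto_vadd a w : length a = length w ->
  zero_upto (length a) (vadd a w) = if zlist_dec a (map Z.opp w) then true else false.
Proof.
  intros H. replace (length a) with (length (vadd a w)) at 1 by (rewrite vadd_length; lia).
  destruct (zero_upto _ _) eqn:E; [apply zero_upto_length in E | ];
    destruct (zlist_dec a (map Z.opp w)) as [Ea | Ea]; auto.
  - exfalso. apply Ea. apply Forall_zero_vadd; auto.
  - rewrite <- E. apply zero_upto_length. apply Forall_zero_vadd; auto.
Qed.

Lemma zero_upto_vsub a w : length a = length w ->
  zero_upto (length a) (vsub a w) = if zlist_dec a w then true else false.
Proof.
  intros H. replace (length a) with (length (vsub a w)) at 1 by (rewrite vsub_length; lia).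
  destruct (zero_upto _ _) eqn:E; [apply zero_upto_length in E | ];
    destruct (zlist_dec a w) as [Ea | Ea]; auto.
  - exfalso. apply Ea. apply Forall_zero_vsub; auto.
  - rewrite <- E. apply zero_upto_length. apply Forall_zero_vsub; auto.
Qed.

Lemma haar_int_char_product N a w th : length a = N -> length w = N ->
  haar_int N (fun ph => cos (dotZ a (subang th ph) 0) * cos (dotZ w (subang th ph) 0)) =
  / 2 * (if zlist_dec a (map Z.opp w) then 1 else 0) + / 2 * (if zlist_dec a w then 1 else 0).
Proof.
  intros Ha Hw. unfold haar_int.
  rewrite (IntTorus_ext _ _ (fun ph => / 2 * cos (dotZ (vadd a w) (subang th ph) 0) +
                                     / 2 * cos (dotZ (vsub a w) (subang th ph) 0))).
  2:{ intros ph. rewrite dotZ_vadd, dotZ_vsub, cos_plus, cos_minus by lia. field. }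
  rewrite IntTorus_plus, !IntTorus_scal by (try apply unif_cont_scal; apply unif_cont_char).
  fold (haar_int N (fun ph => cos (dotZ (vadd a w) (subang th ph) 0))).
  fold (haar_int N (fun ph => cos (dotZ (vsub a w) (subang th ph) 0))).
  rewrite !haar_int_char by (rewrite ?vadd_length, ?vsub_length; lia).
  rewrite <- Ha, zero_upto_vadd, zero_upto_vsub by lia.
  destruct (zlist_dec a (map Z.opp w)), (zlist_dec a w); reflexivity.
Qed.

(* The kernel [y |-> sigma_n^{N-1}(x y^{-1})]; its imaginary part vanishes by [sigma_im_zero]. *)
Definition kernel (N n : nat) (th ph : nat -> R) : R := sigma_re N n (INR (N - 1)) (subang th ph).

Lemma unif_cont_kernel N n th : unif_cont (kernel N n th).
Proof.
  unfold kernel, sigma_re, S_re. apply unif_cont_sum. intros k _.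
  apply unif_cont_scal, unif_cont_sum. intros al _. apply unif_cont_char.
Qed.

Lemma bounded_kernel N n th : bounded (kernel N n th).
Proof.
  unfold kernel, sigma_re, S_re. apply bounded_sum. intros k _.
  apply bounded_scal, bounded_sum. intros al _. apply bounded_cos.
Qed.

Lemma kernel_nonneg N n th ph : (1 <= N)%nat -> 0 <= kernel N n th ph.
Proof.
  intros HN. unfold kernel. destruct N as [|m]; [lia |].
  replace (S m - 1)%nat with m by lia. apply sigma_re_nonneg.
Qed.

Lemma sumR_ZNk_char_product N k w th : length w = N -> zsum w = 0%Z ->
  sumR (map (fun a => haar_int N (fun ph => cos (dotZ a (subang th ph) 0) * cos (dotZ w (subang th ph) 0)))
            (ZNk N k)) =
  if Nat.eq_dec k (Z.to_nat (zsum (vpos w))) then 1 else 0.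
Proof.
  intros Hw Hz.
  rewrite (sumR_ext _ (fun a => / 2 * (if zlist_dec a (map Z.opp w) then 1 else 0) +
                                / 2 * (if zlist_dec a w then 1 else 0)))
    by (intros a Ha; apply haar_int_char_product; auto; eapply ZNk_length; eauto).
  rewrite sumR_plus, !sumR_scal.
  rewrite (sumR_indicator zlist_dec (fun _ => 1)), (sumR_indicator zlist_dec (fun _ => 1))
    by apply NoDup_ZNk.
  pose proof (zsum_pos_neg w). pose proof (zsum_nonneg _ (vpos_nonneg w)).
  destruct (in_dec zlist_dec (map Z.opp w) (ZNk N k)) as [H1 | H1];
    rewrite In_ZNk, zsum_opp, vpos_opp in H1 by (rewrite length_map; auto);
  destruct (in_dec zlist_dec w (ZNk N k)) as [H2 | H2]; rewrite In_ZNk in H2 by auto;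
  destruct (Nat.eq_dec k (Z.to_nat (zsum (vpos w)))); try lra; exfalso;
    try (apply H1; split; lia); try (apply H2; split; lia); lia.
Qed.

Lemma haar_int_kernel_char N n th w k0 : (1 <= N)%nat -> length w = N ->
  zsum w = 0%Z -> zsum (vpos w) = Z.of_nat k0 -> (k0 <= n)%nat ->
  haar_int N (fun ph => kernel N n th ph * cos (dotZ w (subang th ph) 0)) = coefs n (INR (N - 1)) k0.
Proof.
  intros HN Hw Hz Hk Hkn. unfold kernel, sigma_re, S_re, haar_int.
  set (C a ph := cos (dotZ a (subang th ph) 0) * cos (dotZ w (subang th ph) 0)).
  assert (UC : forall a, unif_cont (C a)).
  { intros a. apply unif_cont_mult; auto using unif_cont_char, bounded_cos. }
  rewrite (IntTorus_ext _ _ (fun ph => sumR (map (fun k => coefs n (INR (N - 1)) k *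
             sumR (map (fun a => C a ph) (ZNk N k))) (seq 0 (S n))))).
  2:{ intros ph. rewrite Rmult_comm, <- sumR_scal. apply sumR_ext. intros k _.
      rewrite Rmult_comm, Rmult_assoc, (Rmult_comm _ (cos _)), <- sumR_scal. f_equal.
      apply sumR_ext. intros. unfold C. ring. }
  rewrite IntTorus_sum by (intros; apply unif_cont_scal, unif_cont_sum; auto).
  rewrite (sumR_ext _ (fun k => if Nat.eq_dec k k0 then coefs n (INR (N - 1)) k else 0)).
  - rewrite (sumR_indicator Nat.eq_dec) by apply seq_NoDup.
    destruct (in_dec Nat.eq_dec k0 (seq 0 (S n))) as [| C0]; auto.
    exfalso. apply C0, in_seq. lia.
  - intros k _. rewrite IntTorus_scal, IntTorus_sum by (auto; apply unif_cont_sum; auto).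
    rewrite (sumR_ext _ (fun a => haar_int N (C a))) by reflexivity.
    unfold C. rewrite sumR_ZNk_char_product, Hk, Nat2Z.id by auto.
    destruct (Nat.eq_dec k k0); ring.
Qed.

Lemma haar_int_kernel N n th : (1 <= N)%nat -> haar_int N (kernel N n th) = 1.
Proof.
  intros HN.
  assert (Hz : forall N, zsum (repeat 0%Z N) = 0%Z) by (induction N0; unfold zsum in *; simpl; auto).
  assert (Hp : forall N, vpos (repeat 0%Z N) = repeat 0%Z N)
    by (induction N0; unfold vpos in *; simpl; f_equal; auto).
  pose proof (haar_int_kernel_char N n th (repeat 0%Z N) 0 HN (repeat_length _ _)
                (Hz N) ltac:(rewrite Hp; apply Hz) ltac:(lia)) as H.
  replace (coefs n (INR (N - 1)) 0) with 1 in H by (unfold coefs; simpl; field).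
  rewrite <- H.
  apply IntTorus_ext. intros ph.
  rewrite dotZ_zeros, cos_0, Rmult_1_r; auto.
  apply List.Forall_forall. intros x Hx. now apply repeat_spec in Hx.
Qed.

Lemma dotZ_seq (f : nat -> Z) y len : forall s,
  dotZ (map f (seq s len)) y s = sumR (map (fun i => IZR (f i) * y i) (seq s len)).
Proof. induction len; intros s; simpl; auto. now rewrite IHlen. Qed.

Definition unit_diff (N j l : nat) : list Z :=
  map (fun i => (Z.b2z (Nat.eqb i j) - Z.b2z (Nat.eqb i l))%Z) (seq 0 N).

Lemma dotZ_unit_diff N j l y : (j < N)%nat -> (l < N)%nat ->
  dotZ (unit_diff N j l) y 0 = y j - y l.
Proof.
  intros Hj Hl. unfold unit_diff. rewrite dotZ_seq.
  rewrite (sumR_ext _ (fun i => (if Nat.eq_dec i j then y i else 0) +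
                                - (if Nat.eq_dec i l then y i else 0))).
  - rewrite sumR_plus, sumR_opp, !(sumR_indicator Nat.eq_dec y) by apply seq_NoDup.
    destruct (in_dec Nat.eq_dec j (seq 0 N)) as [| C1]; [| exfalso; apply C1, in_seq; lia].
    destruct (in_dec Nat.eq_dec l (seq 0 N)) as [| C2]; [| exfalso; apply C2, in_seq; lia].
    ring.
  - intros i _. rewrite minus_IZR.
    destruct (Nat.eqb_spec i j), (Nat.eqb_spec i l), (Nat.eq_dec i j), (Nat.eq_dec i l);
      simpl; try lia; ring.
Qed.

Lemma zsum_indicator j len s :
  zsum (map (fun i => Z.b2z (Nat.eqb i j)) (seq s len)) =
  if (Nat.leb s j && Nat.ltb j (s + len))%bool then 1%Z else 0%Z.
Proof.
  revert s; induction len; intros s; simpl.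
  - destruct (Nat.leb_spec s j), (Nat.ltb_spec j (s + 0)); simpl; auto; lia.
  - unfold zsum in *; simpl. rewrite IHlen.
    destruct (Nat.eqb_spec s j), (Nat.leb_spec s j), (Nat.ltb_spec j (s + S len)),
      (Nat.leb_spec (S s) j), (Nat.ltb_spec j (S s + len)); simpl; lia.
Qed.

Lemma zsum_map_sub {A} (f g : A -> Z) L :
  zsum (map (fun x => (f x - g x)%Z) L) = (zsum (map f L) - zsum (map g L))%Z.
Proof. induction L; unfold zsum in *; simpl; lia. Qed.

Lemma zsum_map_le {A} (f g : A -> Z) L :
  (forall x, In x L -> (f x <= g x)%Z) -> (zsum (map f L) <= zsum (map g L))%Z.
Proof.
  induction L; unfold zsum in *; simpl; intros H; [lia |].
  specialize (IHL ltac:(auto)). specialize (H a ltac:(auto)). lia.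
Qed.

Lemma unit_diff_balanced N j l : (j < N)%nat -> (l < N)%nat ->
  length (unit_diff N j l) = N /\ zsum (unit_diff N j l) = 0%Z /\
  (0 <= zsum (vpos (unit_diff N j l)) <= 1)%Z.
Proof.
  intros Hj Hl. unfold unit_diff. rewrite length_map, length_seq. split; auto. split.
  - rewrite zsum_map_sub, !zsum_indicator.
    destruct (Nat.ltb_spec j (0 + N)), (Nat.ltb_spec l (0 + N)); simpl; lia.
  - split; [apply zsum_nonneg, vpos_nonneg |].
    unfold vpos. rewrite map_map.
    eapply Z.le_trans; [apply (zsum_map_le _ (fun i => Z.b2z (Nat.eqb i j))) |].
    + intros x _. destruct (Nat.eqb x j), (Nat.eqb x l); simpl; lia.
    + rewrite zsum_indicator. destruct (_ && _)%bool; lia.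
Qed.

(* [diag_dev N th ph] vanishes exactly when [th - ph] is a diagonal vector (mod 2 pi). *)
Definition diag_dev (N : nat) (th ph : nat -> R) : R :=
  sumR (map (fun j => sumR (map (fun l =>
    1 - cos ((th j - ph j) - (th l - ph l))) (seq 0 N))) (seq 0 N)).

Lemma unif_cont_one_minus_cos th j l :
  unif_cont (fun ph => 1 - cos ((th j - ph j) - (th l - ph l))).
Proof.
  apply (unif_cont_ext (fun ph => (-1) * cos (dotZ (unit_diff (S (Nat.max j l)) j l) (subang th ph) 0) + 1)).
  - intros ph. rewrite dotZ_unit_diff by lia. unfold subang. ring.
  - apply unif_cont_lin; auto using unif_cont_char, unif_cont_const.
Qed.

Lemma bounded_one_minus_cos th j l :
  bounded (fun ph => 1 - cos ((th j - ph j) - (th l - ph l))).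
Proof.
  apply (bounded_ext (fun ph => cos ((th j - ph j) - (th l - ph l)) * (-1) + 1)); [intros; ring |].
  auto using bounded_plus, bounded_mult, bounded_cos, bounded_const.
Qed.

Lemma unif_cont_diag_dev N th : unif_cont (diag_dev N th).
Proof.
  unfold diag_dev. apply unif_cont_sum. intros j _. apply unif_cont_sum. intros l _.
  apply unif_cont_one_minus_cos.
Qed.

Lemma bounded_diag_dev N th : bounded (diag_dev N th).
Proof.
  unfold diag_dev. apply bounded_sum. intros j _. apply bounded_sum. intros l _.
  apply bounded_one_minus_cos.
Qed.

Lemma diag_dev_ge N th ph j : (j < N)%nat ->
  1 - cos ((th j - ph j) - (th 0%nat - ph 0%nat)) <= diag_dev N th ph.
Proof.
  intros Hj. unfold diag_dev.
  assert (Hnn : forall a b, 0 <= 1 - cos (a - b)) by (intros; pose proof (COS_bound (a - b)); lra).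
  eapply Rle_trans; [| apply (sumR_ge_elem _ _ j)].
  - apply (sumR_ge_elem (fun l => 1 - cos (th j - ph j - (th l - ph l)))); auto. apply in_seq; lia.
  - intros i _. apply sumR_nonneg. auto.
  - apply in_seq; lia.
Qed.

Lemma diag_dev_nonneg N th ph : 0 <= diag_dev N th ph.
Proof.
  unfold diag_dev. apply sumR_nonneg. intros. apply sumR_nonneg. intros.
  pose proof (COS_bound (th x - ph x - (th x0 - ph x0))). lra.
Qed.

Lemma haar_int_kernel_one_minus_cos N n th j l : (2 <= N)%nat -> (1 <= n)%nat ->
  (j < N)%nat -> (l < N)%nat ->
  haar_int N (fun ph => kernel N n th ph * (1 - cos ((th j - ph j) - (th l - ph l)))) <=
  INR (N - 1) / (INR n + INR (N - 1)).
Proof.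
  intros HN Hn Hj Hl. unfold haar_int.
  assert (Hpos : 0 < INR n + INR (N - 1))
    by (pose proof (lt_0_INR n ltac:(lia)); pose proof (pos_INR (N - 1)); lra).
  destruct (unit_diff_balanced N j l) as [L1 [L2 L3]]; try lia.
  set (w := unit_diff N j l) in *.
  rewrite (IntTorus_ext _ _ (fun ph => 1 * kernel N n th ph +
              (- 1) * (kernel N n th ph * cos (dotZ w (subang th ph) 0)))).
  2:{ intros ph. unfold w. rewrite dotZ_unit_diff by lia. unfold subang. ring. }
  rewrite IntTorus_lin, IntTorus_scal by
    (auto using unif_cont_kernel, unif_cont_scal, unif_cont_mult, unif_cont_char,
       bounded_kernel, bounded_cos).
  fold (haar_int N (kernel N n th)).
  fold (haar_int N (fun ph => kernel N n th ph * cos (dotZ w (subang th ph) 0))).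
  rewrite haar_int_kernel, (haar_int_kernel_char N n th w (Z.to_nat (zsum (vpos w)))); auto; try lia.
  unfold coefs.
  destruct (Z.eq_dec (zsum (vpos w)) 0) as [-> | E].
  - simpl. assert (0 <= INR (N - 1) / (INR n + INR (N - 1)))
      by (apply Rmult_le_pos; [apply pos_INR | apply Rlt_le, Rinv_0_lt_compat; lra]).
    rewrite Rdiv_1_r. lra.
  - replace (Z.to_nat (zsum (vpos w))) with 1%nat by lia. simpl.
    right. field. lra.
Qed.

Lemma haar_int_kernel_diag_dev N n th : (2 <= N)%nat -> (1 <= n)%nat ->
  haar_int N (fun ph => kernel N n th ph * diag_dev N th ph) <=
  INR N * INR N * (INR (N - 1) / (INR n + INR (N - 1))).
Proof.
  intros HN Hn. unfold haar_int, diag_dev.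
  assert (UC : forall j l, unif_cont (fun ph =>
                 kernel N n th ph * (1 - cos ((th j - ph j) - (th l - ph l)))))
    by (intros; apply unif_cont_mult; auto using unif_cont_kernel, bounded_kernel,
          unif_cont_one_minus_cos, bounded_one_minus_cos).
  rewrite (IntTorus_ext _ _ (fun ph => sumR (map (fun j => sumR (map (fun l =>
      kernel N n th ph * (1 - cos ((th j - ph j) - (th l - ph l)))) (seq 0 N))) (seq 0 N))))
    by (intros ph; rewrite <- sumR_scal; apply sumR_ext; intros; now rewrite <- sumR_scal).
  rewrite IntTorus_sum by (intros; apply unif_cont_sum; auto).
  set (c := INR (N - 1) / (INR n + INR (N - 1))).
  replace (INR N * INR N * c) with (sumR (map (fun _ => sumR (map (fun _ => c) (seq 0 N))) (seq 0 N)))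
    by (rewrite !sumR_const, length_seq; ring).
  apply sumR_le. intros j Hj.
  rewrite IntTorus_sum by auto.
  apply sumR_le. intros l Hl. apply in_seq in Hj, Hl.
  apply haar_int_kernel_one_minus_cos; lia.
Qed.

(* Compactness of [0, 2 pi]^N in the form of a bisection principle: a property of
   boxes that passes to one of the two halves of a box and fails for all small boxes
   around any given point holds for no box. *)
Section Bisection.
Variable N : nat.
Variable Bad : (nat -> R) -> (nat -> R) -> Prop.
Hypothesis Bad_split : forall lo wd j, (j < N)%nat -> Bad lo wd ->
  Bad lo (upd wd j (wd j / 2)) \/ Bad (upd lo j (lo j + wd j / 2)) (upd wd j (wd j / 2)).
Hypothesis Bad_local : forall p, exists del, 0 < del /\ forall lo wd,
  (forall i, (i < N)%nat -> 0 <= wd i < del /\ lo i <= p i <= lo i + wd i) -> ~ Bad lo wd.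

Definition box : Type := (nat -> R) * (nat -> R).

Definition halve (b : box) (j : nat) : box :=
  if excluded_middle_informative (Bad (fst b) (upd (snd b) j (snd b j / 2)))
  then (fst b, upd (snd b) j (snd b j / 2))
  else (upd (fst b) j (fst b j + snd b j / 2), upd (snd b) j (snd b j / 2)).

Definition nested (b b' : box) : Prop :=
  forall i, fst b i <= fst b' i /\ fst b' i + snd b' i <= fst b i + snd b i.

Definition nonneg_width (b : box) : Prop := forall i, 0 <= snd b i.

Lemma halve_Bad b j : (j < N)%nat -> Bad (fst b) (snd b) -> Bad (fst (halve b j)) (snd (halve b j)).
Proof.
  intros Hj H. unfold halve. destruct (excluded_middle_informative _); simpl; auto.
  destruct (Bad_split _ _ _ Hj H); tauto.
Qed.

Lemma halve_width b j i : snd (halve b j) i = if Nat.eqb i j then snd b j / 2 else snd b i.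
Proof. unfold halve. destruct (excluded_middle_informative _); reflexivity. Qed.

Lemma halve_nested b j : nonneg_width b -> nested b (halve b j) /\ nonneg_width (halve b j).
Proof.
  intros Hw. split.
  - intros i. specialize (Hw i). unfold halve, upd.
    destruct (excluded_middle_informative _); simpl; destruct (Nat.eqb_spec i j); subst; lra.
  - intros i. rewrite halve_width. pose proof (Hw i). pose proof (Hw j).
    destruct (Nat.eqb i j); lra.
Qed.

Lemma nested_refl b : nested b b.
Proof. intros i; lra. Qed.

Lemma nested_trans b1 b2 b3 : nested b1 b2 -> nested b2 b3 -> nested b1 b3.
Proof. intros H1 H2 i. specialize (H1 i). specialize (H2 i). lra. Qed.

Lemma fold_halve L : forall b, nonneg_width b ->
  nested b (fold_left halve L b) /\ nonneg_width (fold_left halve L b) /\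
  ((forall j, In j L -> (j < N)%nat) -> Bad (fst b) (snd b) ->
     Bad (fst (fold_left halve L b)) (snd (fold_left halve L b))) /\
  (NoDup L -> forall i,
     snd (fold_left halve L b) i = if in_dec Nat.eq_dec i L then snd b i / 2 else snd b i).
Proof.
  induction L as [|j L IH]; intros b Hw; simpl.
  - split; [apply nested_refl | auto].
  - destruct (halve_nested b j Hw) as [N1 W1].
    destruct (IH (halve b j) W1) as [N2 [W2 [B2 S2]]].
    split; [eapply nested_trans; eauto |]. split; [auto |]. split.
    + intros HL HB. apply B2; auto. apply halve_Bad; auto.
    + intros HN i. apply NoDup_cons_iff in HN as [Hj HL]. rewrite S2, halve_width by auto.
      destruct (Nat.eqb_spec i j), (in_dec Nat.eq_dec i L), (Nat.eq_dec j i);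
        subst; try congruence; try contradiction; reflexivity.
Qed.

Definition bisect (b : box) (q : nat) : box := Nat.iter q (fun c => fold_left halve (seq 0 N) c) b.

Lemma bisect_nonneg_width b q : nonneg_width b -> nonneg_width (bisect b q).
Proof. intros Hw. induction q; [auto |]. apply fold_halve; auto. Qed.

Lemma bisect_props b q : nonneg_width b -> Bad (fst b) (snd b) ->
  Bad (fst (bisect b q)) (snd (bisect b q)) /\
  (forall i, (i < N)%nat -> snd (bisect b q) i = snd b i * (/ 2) ^ q).
Proof.
  intros Hw HB. induction q as [|q [B1 S1]].
  - simpl. split; auto. intros; ring.
  - cbn [bisect Nat.iter]. fold (bisect b q).
    destruct (fold_halve (seq 0 N) (bisect b q) (bisect_nonneg_width b q Hw)) as [_ [_ [B2 S2]]].
    split.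
    + apply B2; auto. intros j Hj; apply in_seq in Hj; lia.
    + intros i Hi. rewrite S2 by apply seq_NoDup.
      destruct (in_dec Nat.eq_dec i (seq 0 N)) as [_ | C]; [| exfalso; apply C, in_seq; lia].
      rewrite S1 by auto. simpl. field.
Qed.

Lemma bisect_nested b q k : nonneg_width b -> nested (bisect b q) (bisect b (q + k)).
Proof.
  intros Hw. induction k; [rewrite Nat.add_0_r; apply nested_refl |].
  eapply nested_trans; [exact IHk |]. rewrite Nat.add_succ_r.
  apply fold_halve, bisect_nonneg_width; auto.
Qed.

Lemma bisect_lower_le b q q' i : nonneg_width b ->
  fst (bisect b q') i <= fst (bisect b q) i + snd (bisect b q) i.
Proof.
  intros Hw. pose proof (fun r => bisect_nonneg_width b r Hw) as Hnn.
  destruct (le_lt_dec q q').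
  - replace q' with (q + (q' - q))%nat by lia.
    specialize (bisect_nested b q (q' - q) Hw i). specialize (Hnn (q + (q' - q))%nat i). lra.
  - replace q with (q' + (q - q'))%nat by lia.
    specialize (bisect_nested b q' (q - q') Hw i). specialize (Hnn (q' + (q - q'))%nat i). lra.
Qed.

Lemma box_bisection lo wd : (forall i, 0 <= wd i) -> ~ Bad lo wd.
Proof.
  intros Hw HB. set (B := bisect (lo, wd)).
  pose proof (fun q => bisect_props (lo, wd) q Hw HB) as HBq. fold B in HBq.
  (* the common point of the nested boxes, coordinatewise a supremum of lower corners *)
  set (E i := fun x => exists q, x = fst (B q) i).
  assert (HE : forall i, bound (E i)).
  { intros i. exists (fst (B 0%nat) i + snd (B 0%nat) i). intros x [q ->].
    apply bisect_lower_le; auto. }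
  assert (HE' : forall i, exists x, E i x) by (intros i; exists (fst (B 0%nat) i), 0%nat; auto).
  set (p := fun i => proj1_sig (completeness (E i) (HE i) (HE' i))).
  assert (Hp : forall q i, fst (B q) i <= p i <= fst (B q) i + snd (B q) i).
  { intros q i. unfold p. destruct (completeness (E i) (HE i) (HE' i)) as [m [Hm1 Hm2]]. simpl.
    split; [apply Hm1; exists q; auto |].
    apply Hm2. intros x [q' ->]. apply bisect_lower_le; auto. }
  destruct (Bad_local p) as [del [Hd Hl]].
  set (W := sumR (map wd (seq 0 N)) + 1).
  assert (HW : forall i, (i < N)%nat -> wd i < W).
  { intros i Hi. unfold W.
    assert (wd i <= sumR (map wd (seq 0 N))) by (apply sumR_ge_elem; auto; apply in_seq; lia).
    lra. }
  assert (W0 : 0 < W) by (unfold W; pose proof (sumR_nonneg wd (seq 0 N) (fun i _ => Hw i)); lra).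
  destruct (pow_lt_1_zero (/ 2)) with (y := del / W) as [q Hq];
    [rewrite Rabs_right; lra | apply Rdiv_lt_0_compat; auto |].
  specialize (Hq q (le_n q)). rewrite Rabs_right in Hq by (apply Rle_ge, pow_le; lra).
  destruct (HBq q) as [B1 S1].
  apply (Hl (fst (B q)) (snd (B q))); auto.
  intros i Hi. split; [split; [apply bisect_nonneg_width; auto |] | apply Hp].
  rewrite S1 by auto. simpl.
  assert (0 <= (/ 2) ^ q) by (apply pow_le; lra).
  apply Rle_lt_trans with (W * (/ 2) ^ q).
  - apply Rmult_le_compat_r; auto. left; apply HW; auto.
  - apply (Rmult_lt_reg_r (/ W)); [apply Rinv_0_lt_compat; auto |].
    replace (W * (/ 2) ^ q * / W) with ((/ 2) ^ q) by (field; lra). auto.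
Qed.
End Bisection.

Lemma upd_upd th j a b : upd (upd th j a) j b = upd th j b.
Proof. apply functional_extensionality; intros i. unfold upd. now destruct (Nat.eqb i j). Qed.

Lemma upd_same th j : upd th j (th j) = th.
Proof. apply functional_extensionality; intros i. unfold upd. destruct (Nat.eqb_spec i j); now subst. Qed.

Lemma upd_eq th j a : upd th j a j = a.
Proof. unfold upd. now rewrite Nat.eqb_refl. Qed.

Lemma shift_into_period (x : nat -> R) :
  exists s : nat -> Z, forall i, 0 <= x i + 2 * PI * IZR (s i) <= 2 * PI.
Proof.
  pose proof two_PI_pos.
  exists (fun i => (1 - up (x i / (2 * PI)))%Z). intros i.
  destruct (archimed (x i / (2 * PI))) as [H1 H2].
  rewrite minus_IZR. set (u := IZR (up (x i / (2 * PI)))) in *.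
  replace (x i) with (2 * PI * (x i / (2 * PI))) at 1 2 by (field; lra).
  split.
  - assert (0 <= 2 * PI * (x i / (2 * PI) + 1 - u)) by (apply Rmult_le_pos; lra). nra.
  - assert (2 * PI * (x i / (2 * PI) + 1 - u) <= 2 * PI * 1)
      by (apply Rmult_le_compat_l; lra). nra.
Qed.

Section TorusFunction.
Variable N : nat.
Variable g : (nat -> R) -> R.
Hypothesis Hg : torus_fun N g.

Lemma torus_fun_periodic_nat th j k : (j < N)%nat -> g (upd th j (th j + 2 * PI * INR k)) = g th.
Proof.
  intros Hj. induction k.
  - simpl. now rewrite Rmult_0_r, Rplus_0_r, upd_same.
  - set (th' := upd th j (th j + 2 * PI * INR k)).
    replace (upd th j (th j + 2 * PI * INR (S k))) with (upd th' j (th' j + 2 * PI)).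
    + rewrite (proj1 (proj2 Hg)); auto.
    + unfold th'. rewrite upd_upd, upd_eq, S_INR. f_equal. ring.
Qed.

Lemma torus_fun_periodic th j k : (j < N)%nat -> g (upd th j (th j + 2 * PI * IZR k)) = g th.
Proof.
  intros Hj. destruct (Z_le_gt_dec 0 k).
  - replace k with (Z.of_nat (Z.to_nat k)) by lia. rewrite <- INR_IZR_INZ.
    apply torus_fun_periodic_nat; auto.
  - set (th'' := upd th j (th j + 2 * PI * IZR k)).
    rewrite <- (torus_fun_periodic_nat th'' j (Z.to_nat (- k)) Hj).
    unfold th''. rewrite upd_upd, upd_eq, INR_IZR_INZ, Z2Nat.id by lia.
    replace (th j + 2 * PI * IZR k + 2 * PI * IZR (- k)) with (th j)
      by (rewrite opp_IZR; ring).
    now rewrite upd_same.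
Qed.

Lemma torus_fun_shift th (s : nat -> Z) : g (fun i => th i + 2 * PI * IZR (s i)) = g th.
Proof.
  set (sh p := fun i => if Nat.ltb i p then th i + 2 * PI * IZR (s i) else th i).
  assert (H : forall p, (p <= N)%nat -> g (sh p) = g th).
  { induction p; intros Hp; [reflexivity |].
    replace (sh (S p)) with (upd (sh p) p (sh p p + 2 * PI * IZR (s p))).
    - rewrite torus_fun_periodic by lia. apply IHp; lia.
    - apply functional_extensionality; intros i. unfold upd, sh.
      destruct (Nat.eqb_spec i p), (Nat.ltb_spec i (S p)), (Nat.ltb_spec i p);
        subst; try lia; auto.
      destruct (Nat.ltb_spec p p); [lia | auto]. }
  rewrite <- (H N (le_n N)). apply Hg. intros i Hi. unfold sh.
  destruct (Nat.ltb_spec i N); [auto | lia].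
Qed.

Definition in_box (lo wd x : nat -> R) : Prop :=
  forall i, (i < N)%nat -> lo i <= x i <= lo i + wd i.

Lemma in_box_halves lo wd j x : (j < N)%nat -> in_box lo wd x ->
  in_box lo (upd wd j (wd j / 2)) x \/ in_box (upd lo j (lo j + wd j / 2)) (upd wd j (wd j / 2)) x.
Proof.
  intros Hj H. destruct (Rle_dec (x j) (lo j + wd j / 2)); [left | right];
    intros i Hi; unfold upd; destruct (Nat.eqb_spec i j); subst; auto;
    specialize (H j Hi); lra.
Qed.

Lemma torus_fun_unif_cont : forall eps, 0 < eps -> exists del, 0 < del /\ forall x y,
  (forall i, (i < N)%nat -> Rabs (x i - y i) < del) -> Rabs (g x - g y) < eps.
Proof.
  intros eps He. apply NNPP. intros Hn.
  pose proof PI_RGT_0.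
  set (Bad lo wd := forall del, 0 < del -> exists x y, in_box lo wd x /\
     (forall i, (i < N)%nat -> Rabs (x i - y i) < del) /\ eps <= Rabs (g x - g y)).
  apply (box_bisection N Bad) with (lo := fun _ => 0) (wd := fun _ => 2 * PI); [| | intros; lra |].
  - intros lo wd j Hj HB. apply NNPP. intros C. apply not_or_and in C as [C1 C2].
    apply not_all_ex_not in C1 as [d1 C1]. apply imply_to_and in C1 as [Hd1 C1].
    apply not_all_ex_not in C2 as [d2 C2]. apply imply_to_and in C2 as [Hd2 C2].
    destruct (HB (Rmin d1 d2)) as [x [y [Hx [Hxy Hge]]]]; [apply Rmin_pos; auto |].
    pose proof (Rmin_l d1 d2). pose proof (Rmin_r d1 d2).
    destruct (in_box_halves lo wd j x Hj Hx); [apply C1 | apply C2]; exists x, y;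
      (split; [auto | split; [| auto]]); intros i Hi; specialize (Hxy i Hi); lra.
  - intros p. destruct (proj2 (proj2 Hg) p (eps / 2)) as [d0 [Hd0 Hc]]; [lra |].
    exists (d0 / 2). split; [lra |]. intros lo wd Hbox HB.
    destruct (HB (d0 / 2)) as [x [y [Hx [Hxy Hge]]]]; [lra |].
    assert (Rabs (g x - g p) < eps / 2).
    { apply Hc. intros i Hi. destruct (Hbox i Hi) as [[W1 W2] P1]. specialize (Hx i Hi).
      apply Rabs_def1; lra. }
    assert (Rabs (g y - g p) < eps / 2).
    { apply Hc. intros i Hi. destruct (Hbox i Hi) as [[W1 W2] P1]. specialize (Hx i Hi).
      specialize (Hxy i Hi). apply Rabs_def2 in Hxy. apply Rabs_def1; lra. }
    pose proof (Rabs_triang (g x - g p) (- (g y - g p))). rewrite Rabs_Ropp in H2.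
    replace (g x - g p + - (g y - g p)) with (g x - g y) in H2 by ring. lra.
  - intros del Hd. apply NNPP. intros C. apply Hn. exists del. split; auto.
    intros x y Hxy. apply Rnot_le_lt. intros Hge.
    destruct (shift_into_period x) as [s Hs].
    apply C. exists (fun i => x i + 2 * PI * IZR (s i)), (fun i => y i + 2 * PI * IZR (s i)).
    split; [intros i Hi; specialize (Hs i); lra |]. split.
    + intros i Hi.
      replace (x i + 2 * PI * IZR (s i) - (y i + 2 * PI * IZR (s i))) with (x i - y i) by ring.
      auto.
    + now rewrite !torus_fun_shift.
Qed.

Lemma torus_fun_bounded : bounded g.
Proof.
  apply NNPP. intros Hn.
  pose proof PI_RGT_0.
  set (Bad lo wd := forall M, exists x, in_box lo wd x /\ M < Rabs (g x)).
  apply (box_bisection N Bad) with (lo := fun _ => 0) (wd := fun _ => 2 * PI); [| | intros; lra |].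
  - intros lo wd j Hj HB. apply NNPP. intros C. apply not_or_and in C as [C1 C2].
    apply not_all_ex_not in C1 as [M1 C1]. apply not_all_ex_not in C2 as [M2 C2].
    destruct (HB (Rmax M1 M2)) as [x [Hx HM]].
    pose proof (Rmax_l M1 M2). pose proof (Rmax_r M1 M2).
    destruct (in_box_halves lo wd j x Hj Hx); [apply C1 | apply C2]; exists x; split; auto; lra.
  - intros p. destruct (proj2 (proj2 Hg) p 1) as [d0 [Hd0 Hc]]; [lra |].
    exists d0. split; [lra |]. intros lo wd Hbox HB.
    destruct (HB (Rabs (g p) + 1)) as [x [Hx HM]].
    assert (Rabs (g x - g p) < 1).
    { apply Hc. intros i Hi. destruct (Hbox i Hi) as [[W1 W2] P1]. specialize (Hx i Hi).
      apply Rabs_def1; lra. }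
    pose proof (Rabs_triang_inv (g x) (g p)). lra.
  - intros M. apply NNPP. intros C. apply Hn. exists M. intros x. apply Rnot_lt_le. intros HM.
    destruct (shift_into_period x) as [s Hs]. apply C. exists (fun i => x i + 2 * PI * IZR (s i)).
    split; [intros i Hi; specialize (Hs i); lra | now rewrite torus_fun_shift].
Qed.
Lemma unif_cont_torus_fun : unif_cont g.
Proof.
  intros e He. destruct (torus_fun_unif_cont e He) as [d [Hd H]]. exists d. split; auto.
  intros x y Hc. left. apply H. intros i _. apply Hc.
Qed.
End TorusFunction.

Lemma abs_lt_of_cos_lt z d : 0 < d <= PI -> - PI <= z <= PI -> cos d < cos z -> Rabs z < d.
Proof.
  intros Hd Hz Hc. apply Rnot_le_lt. intros Hge.
  assert (Hzabs : cos (Rabs z) = cos z).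
  { destruct (Rle_dec 0 z); [rewrite Rabs_right | rewrite Rabs_left, cos_neg]; lra. }
  assert (cos (Rabs z) <= cos d).
  { destruct (Req_dec (Rabs z) d) as [-> | E]; [lra |].
    assert (Rabs z <= PI) by (apply Rabs_le; lra).
    pose proof (Rabs_pos z). left. apply cos_decreasing_1; lra. }
  lra.
Qed.

Lemma near_diagonal_orbit N th ph d : 0 < d <= PI -> diag_dev N th ph < 1 - cos d ->
  exists s : nat -> Z, forall j, (j < N)%nat ->
    Rabs (th j - (ph j + (th 0%nat - ph 0%nat) + 2 * PI * IZR (- s j))) < d.
Proof.
  intros Hd Hsmall.
  set (z j := (th j - ph j) - (th 0%nat - ph 0%nat)).
  destruct (shift_into_period (fun j => z j + PI)) as [s Hs].
  exists s. intros j Hj. specialize (Hs j).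
  replace (th j - (ph j + (th 0%nat - ph 0%nat) + 2 * PI * IZR (- s j)))
    with (z j + 2 * PI * IZR (s j)) by (unfold z; rewrite opp_IZR; ring).
  apply abs_lt_of_cos_lt; [auto | lra |].
  rewrite cos_period_Z. pose proof (diag_dev_ge N th ph j Hj). unfold z. lra.
Qed.

Lemma diag_invariant_modulus N g : torus_fun N g -> (forall th t, g (diag_shift th t) = g th) ->
  forall eps, 0 < eps -> exists C, 0 <= C /\
    forall th ph, Rabs (g th - g ph) <= eps + C * diag_dev N th ph.
Proof.
  intros Hg Hd eps He.
  destruct (torus_fun_unif_cont N g Hg eps He) as [del [Hdel HU]].
  destruct (torus_fun_bounded N g Hg) as [B HB].
  assert (B0 : 0 <= B) by (specialize (HB (fun _ => 0)); pose proof (Rabs_pos (g (fun _ => 0))); lra).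
  pose proof PI_RGT_0.
  set (d := Rmin del PI).
  assert (Hd1 : 0 < d <= PI) by (unfold d; split; [apply Rmin_pos; auto | apply Rmin_r]).
  set (eta := 1 - cos d).
  assert (Heta : 0 < eta).
  { pose proof (cos_decreasing_1 0 d ltac:(lra) ltac:(lra) ltac:(lra) ltac:(lra) ltac:(lra)).
    unfold eta. rewrite cos_0 in H0. lra. }
  exists (2 * B / eta). split; [apply Rmult_le_pos; [lra | apply Rlt_le, Rinv_0_lt_compat; lra] |].
  intros th ph. pose proof (diag_dev_nonneg N th ph).
  assert (0 <= 2 * B / eta * diag_dev N th ph)
    by (apply Rmult_le_pos; auto; apply Rmult_le_pos; [lra | apply Rlt_le, Rinv_0_lt_compat; lra]).
  destruct (Rle_dec eta (diag_dev N th ph)) as [Hbig | Hsmall].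
  - assert (Rabs (g th - g ph) <= 2 * B).
    { eapply Rle_trans; [apply Rabs_triang |]. rewrite Rabs_Ropp.
      pose proof (HB th); pose proof (HB ph); lra. }
    assert (2 * B <= 2 * B / eta * diag_dev N th ph).
    { apply Rle_trans with (2 * B / eta * eta); [right; field; lra |].
      apply Rmult_le_compat_l; auto. apply Rmult_le_pos; [lra | apply Rlt_le, Rinv_0_lt_compat; lra]. }
    lra.
  - apply Rnot_le_lt in Hsmall.
    destruct (near_diagonal_orbit N th ph d Hd1 Hsmall) as [s Hs].
    set (x := fun i => (ph i + (th 0%nat - ph 0%nat)) + 2 * PI * IZR (- s i)).
    assert (Ex : g x = g ph)
      by (unfold x; rewrite (torus_fun_shift N g Hg (fun i => ph i + (th 0%nat - ph 0%nat)));
          apply (Hd ph)).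
    rewrite <- Ex.
    assert (Rabs (g th - g x) < eps).
    { assert (d <= del) by apply Rmin_l.
      apply HU. intros i Hi. specialize (Hs i Hi). unfold x. lra. }
    lra.
Qed.

Lemma kernel_approx_error N n g th eps C : (2 <= N)%nat -> (1 <= n)%nat ->
  unif_cont g -> bounded g -> 0 <= C ->
  (forall ph, Rabs (g th - g ph) <= eps + C * diag_dev N th ph) ->
  Rabs (g th - haar_int N (fun ph => g ph * kernel N n th ph)) <=
  eps + C * (INR N * INR N * (INR (N - 1) / (INR n + INR (N - 1)))).
Proof.
  intros HN Hn Ug Bg HC Hmod. unfold haar_int.
  pose proof (unif_cont_kernel N n th) as UP. pose proof (bounded_kernel N n th) as BP.
  set (P := kernel N n th) in *.
  set (h ph := (g th - g ph) * P ph).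
  assert (Uh : unif_cont h).
  { apply unif_cont_mult; auto.
    - apply (unif_cont_ext (fun x => (-1) * g x + g th)); [intros; ring |].
      apply unif_cont_lin; auto using unif_cont_const.
    - apply (bounded_ext (fun x => g x * (-1) + g th)); [intros; ring |].
      auto using bounded_plus, bounded_mult, bounded_const. }
  assert (UPD : unif_cont (fun ph => P ph * diag_dev N th ph))
    by (apply unif_cont_mult; auto using unif_cont_diag_dev, bounded_diag_dev).
  (* the kernel has mass one, so the error is the average of [g th - g ph] against it *)
  replace (g th - IntTorus N (fun ph => g ph * P ph) (fun _ => 0)) with (IntTorus N h (fun _ => 0)).
  2:{ unfold h. rewrite (IntTorus_ext N _ (fun x => g th * P x + (-1) * (g x * P x))) by (intros; ring).
      rewrite IntTorus_lin, IntTorus_scal by (auto using unif_cont_scal, unif_cont_mult).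
      fold (haar_int N P). unfold P. rewrite haar_int_kernel by lia. ring. }
  eapply Rle_trans; [apply IntTorus_abs; auto |].
  apply Rle_trans with (IntTorus N (fun ph => eps * P ph + C * (P ph * diag_dev N th ph)) (fun _ => 0)).
  - apply IntTorus_le; auto using unif_cont_abs, unif_cont_plus, unif_cont_scal.
    intros ph. unfold h. rewrite Rabs_mult, (Rabs_right (P ph))
      by (apply Rle_ge, kernel_nonneg; lia).
    pose proof (kernel_nonneg N n th ph ltac:(lia)). fold P in H.
    specialize (Hmod ph). nra.
  - rewrite IntTorus_plus, !IntTorus_scal by auto using unif_cont_scal.
    fold (haar_int N P). fold (haar_int N (fun ph => P ph * diag_dev N th ph)).
    unfold P. rewrite haar_int_kernel by lia.
    pose proof (haar_int_kernel_diag_dev N n th HN Hn).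
    rewrite Rmult_1_r. apply Rplus_le_compat_l, Rmult_le_compat_l; auto.
Qed.

Lemma eventually_div_le K a e : 0 <= K -> 0 <= a -> 0 < e ->
  exists n0 : nat, forall n, (n0 <= n)%nat -> K / (INR n + a) <= e.
Proof.
  intros HK Ha He. exists (S (Z.to_nat (up (K / e)))). intros n Hn.
  destruct (archimed (K / e)) as [A _].
  assert (0 <= K / e) by (apply Rmult_le_pos; [lra | apply Rlt_le, Rinv_0_lt_compat; lra]).
  assert (IZR (up (K / e)) <= INR n).
  { rewrite <- (Z2Nat.id (up _)) by (apply le_IZR; lra).
    rewrite <- INR_IZR_INZ. apply le_INR. lia. }
  apply (Rmult_le_reg_r (INR n + a)); [lra |].
  unfold Rdiv. rewrite Rmult_assoc, Rinv_l by lra.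
  apply (Rmult_le_reg_l (/ e)); [apply Rinv_0_lt_compat; lra |].
  replace (/ e * (e * (INR n + a))) with (INR n + a) by (field; lra).
  unfold Rdiv in A. lra.
Qed.

Lemma kernel_approx N g : (2 <= N)%nat -> torus_fun N g ->
  (forall th t, g (diag_shift th t) = g th) ->
  forall e, 0 < e -> exists n0, forall n, (n0 <= n)%nat -> forall th,
    Rabs (g th - haar_int N (fun ph => g ph * kernel N n th ph)) <= e.
Proof.
  intros HN Hg Hd e He.
  destruct (diag_invariant_modulus N g Hg Hd (e / 2) ltac:(lra)) as [C [HC Hmod]].
  destruct (eventually_div_le (C * (INR N * INR N * INR (N - 1))) (INR (N - 1)) (e / 2))
    as [n1 Hn1]; [repeat apply Rmult_le_pos; auto using pos_INR | apply pos_INR | lra |].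
  exists (Nat.max 1 n1). intros n Hn th.
  eapply Rle_trans.
  - apply (kernel_approx_error N n g th (e / 2) C); [lia | lia | | | auto | auto].
    + apply (unif_cont_torus_fun N g Hg).
    + apply (torus_fun_bounded N g Hg).
  - specialize (Hn1 n ltac:(lia)). unfold Rdiv in *.
    rewrite !Rmult_assoc in *. lra.
Qed.

Lemma conv_re_kernel N n fr fi th : (1 <= N)%nat ->
  conv_re N n (INR (N - 1)) fr fi th = haar_int N (fun ph => fr ph * kernel N n th ph).
Proof.
  intros HN. unfold conv_re, haar_int. apply IntTorus_ext. intros ph. unfold kernel.
  destruct N as [|m]; [lia |]. replace (S m - 1)%nat with m by lia.
  rewrite sigma_im_zero. ring.
Qed.

Lemma conv_im_kernel N n fr fi th : (1 <= N)%nat ->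
  conv_im N n (INR (N - 1)) fr fi th = haar_int N (fun ph => fi ph * kernel N n th ph).
Proof.
  intros HN. unfold conv_im, haar_int. apply IntTorus_ext. intros ph. unfold kernel.
  destruct N as [|m]; [lia |]. replace (S m - 1)%nat with m by lia.
  rewrite sigma_im_zero. ring.
Qed.

Lemma sqrt_sum_sq_le a b : sqrt (a ^ 2 + b ^ 2) <= Rabs a + Rabs b.
Proof.
  pose proof (Rabs_pos a). pose proof (Rabs_pos b).
  rewrite <- (sqrt_pow2 (Rabs a + Rabs b)) by lra.
  apply sqrt_le_1_alt. rewrite <- (pow2_abs a), <- (pow2_abs b).
  assert (0 <= Rabs a * Rabs b) by (apply Rmult_le_pos; auto). nra.
Qed.

Theorem proposition4p8 (N : nat) (fr fi : (nat -> R) -> R) :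
  (2 <= N)%nat ->
  torus_fun N fr -> torus_fun N fi ->
  (forall th t, fr (diag_shift th t) = fr th /\ fi (diag_shift th t) = fi th) ->
  forall eps, 0 < eps -> exists n0 : nat, forall n : nat, (n0 <= n)%nat ->
    forall th : nat -> R,
      sqrt ((fr th - conv_re N n (INR (N - 1)) fr fi th) ^ 2
            + (fi th - conv_im N n (INR (N - 1)) fr fi th) ^ 2) <= eps.
Proof.
  intros HN Hr Hi Hd eps He.
  destruct (kernel_approx N fr HN Hr (fun th t => proj1 (Hd th t)) (eps / 2) ltac:(lra)) as [n1 H1].
  destruct (kernel_approx N fi HN Hi (fun th t => proj2 (Hd th t)) (eps / 2) ltac:(lra)) as [n2 H2].
  exists (Nat.max n1 n2). intros n Hn th.
  rewrite conv_re_kernel, conv_im_kernel by lia.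
  specialize (H1 n ltac:(lia) th). specialize (H2 n ltac:(lia) th).
  eapply Rle_trans; [apply sqrt_sum_sq_le | lra].
Qed.
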